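(* There exist $\varepsilon>0$, a constant $\tilde C>0$ and a constant $0<L<1$ such that for all $|u|\le1$, all $|x|\le\rho+\varepsilon$ and all $k\ge0$, $$|\Sigma_k(x,u)|\le\tilde C|u-1|L^k.$$
   Context: Let $y(x)=\sum_{n\ge1}y_nx^n$, $y_n$ the number of unlabelled rooted trees with $n$ vertices; it satisfies $y(x)=x\exp(\sum_{i\ge1}y(x^i)/i)$ and has radius of convergence $\rho\in(0,1)$ with $y(\rho)=1$. Define $y_0(x,u)=uy(x)$, $y_{k+1}(x,u)=x\exp\left(\sum_{i\ge1}y_k(x^i,u^i)/i\right)$, $w_k(x,u)=y_k(x,u)-y(x)$, and $\Sigma_k(x,u)=\sum_{i\ge2}\frac{w_k(x^i,u^i)}{i}$. *)

From Stdlib Require Import Reals List Arith.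
From Coquelicot Require Import Coquelicot.
Import ListNotations.
Open Scope R_scope.

(* ---- number of unlabelled rooted trees with n vertices (OEIS A000081) ----
   computed by the classical recurrence (Cayley/Otter):
   y_1 = 1,  n * y_(n+1) = sum_(k=1..n) (sum_(d | k) d * y_d) * y_(n-k+1). *)
Definition divsum (l : list nat) (k : nat) : nat :=
  (fold_right Nat.add 0
    (map (fun d => if Nat.eqb (Nat.modulo k d) 0 then d * nth d l 0 else 0)
         (seq 1 k)))%nat.

(* given l = [y_0; ...; y_(N-1)], compute y_N *)
Definition next_count (l : list nat) : nat :=
  let N := length l in
  (match N with
  | 0 => 0
  | 1 => 1
  | S n =>
      Nat.div
        (fold_right Nat.add 0
           (map (fun k => divsum l k * nth (n - k + 1) l 0) (seq 1 n)))
        n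
  end)%nat.

Fixpoint count_list (n : nat) : list nat :=
  match n with
  | 0 => [0%nat]
  | S m => let l := count_list m in l ++ [next_count l]
  end.

Definition tree_count (n : nat) : nat := nth n (count_list n) 0%nat.

Definition Cexp (z : C) : C :=
  (exp (Re z) * cos (Im z), exp (Re z) * sin (Im z)).

(* value of the complex series sum_(n>=0) a n (real and imaginary parts
   summed separately; agrees with the true sum whenever it converges) *)
Definition csum (a : nat -> C) : C :=
  (Series (fun n => Re (a n)), Series (fun n => Im (a n))).

Definition ytree (x : C) : C :=
  csum (fun n => Cmult (RtoC (INR (tree_count n))) (Cpow x n)).

Definition rho : R := real (CV_radius (fun n => INR (tree_count n))).

Fixpoint yk (k : nat) : C -> C -> C :=
  match k with
  | 0 => fun x u => Cmult u (ytree x)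
  | S k' => fun x u =>
      Cmult x (Cexp (csum (fun j =>
        Cdiv (yk k' (Cpow x (S j)) (Cpow u (S j))) (RtoC (INR (S j))))))
  end.

Definition wk (k : nat) (x u : C) : C := Cminus (yk k x u) (ytree x).

Definition Sigmak (k : nat) (x u : C) : C :=
  csum (fun j =>
    Cdiv (wk k (Cpow x (S (S j))) (Cpow u (S (S j)))) (RtoC (INR (S (S j))))).

From Stdlib Require Import Reals Lra Lia List Arith.
From Coquelicot Require Import Coquelicot.
Open Scope R_scope.

(* Everything is controlled by the real majorant Y(t) = sum_n y_n t^n on [0, rho).
   The counts satisfy Otter's recurrence n y_(n+1) = sum_k b_k y_(n+1-k) with
   b_k = sum_(d | k) d y_d; it gives y_n <= 16^n, hence rho >= 1/16, and, through the
   ODE (y(x)/x)' = A'(x) (y(x)/x) for A(x) = sum_j y(x^j)/j, the functional equation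
   y(z) = z exp(A(z)) for |z| < rho.  On the reals this reads
   Y(t) exp(-Y(t)) = t exp(sum_(j>=2) Y(t^j)/j), which forces rho <= 1/e and Y <= 1.

   Now y_(k+1)(z,v) = y(z) exp(sum_j w_k(z^j,v^j)/j).  With |e^c - 1| <= |c| max(1, e^(Re c)),
   |v^j - 1| <= j |v - 1| and Y(r^j) <= r^(j-1) Y(r), induction on k gives, for
   |z| <= r0 = (1.1 rho)^2 and |v| <= 1,
      |w_k(z,v)| <= |v - 1| L^k Y(|z|),   L = 0.7 >= Y(r0) / (1 - r0).
   For |x| <= 1.1 rho all the points x^i, i >= 2, lie in that disc, and summing the
   resulting geometric series bounds Sigma_k by 2 |u - 1| L^k. *)

(** * Finite sums *)

Fixpoint psum (f : nat -> R) (n : nat) : R :=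
  match n with O => 0 | S k => psum f k + f k end.

Lemma psum_ext f g n : (forall i, (i < n)%nat -> f i = g i) -> psum f n = psum g n.
Proof. induction n; simpl; intros H; auto. rewrite IHn by (intros; apply H; lia). rewrite H by lia. auto. Qed.

Lemma psum_plus f g n : psum (fun i => f i + g i) n = psum f n + psum g n.
Proof. induction n; simpl; [lra|]. rewrite IHn; lra. Qed.

Lemma psum_scal c f n : psum (fun i => c * f i) n = c * psum f n.
Proof. induction n; simpl; [lra|]. rewrite IHn; lra. Qed.

Lemma psum_opp f n : psum (fun i => - f i) n = - psum f n.
Proof. induction n; simpl; [lra|]. rewrite IHn; lra. Qed.

Lemma psum_zero n : psum (fun _ => 0) n = 0.
Proof. induction n; simpl; [lra|]. rewrite IHn; lra. Qed.

Lemma psum_le f g n : (forall i, (i < n)%nat -> f i <= g i) -> psum f n <= psum g n.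
Proof. induction n; simpl; intros H; [lra|]. specialize (IHn (fun i Hi => H i ltac:(lia))). specialize (H n ltac:(lia)). lra. Qed.

Lemma psum_nonneg f n : (forall i, (i < n)%nat -> 0 <= f i) -> 0 <= psum f n.
Proof. intros H. rewrite <- (psum_zero n). apply psum_le. auto. Qed.

Lemma psum_shift_l g n : psum g (S n) = g O + psum (fun j => g (S j)) n.
Proof. induction n; simpl in *; [lra|]. rewrite IHn. lra. Qed.

Lemma psum_split F a b : psum F (a + b) = psum F a + psum (fun l => F (a + l)%nat) b.
Proof. induction b; simpl. rewrite Nat.add_0_r; lra. rewrite Nat.add_succ_r; simpl. rewrite IHb; lra. Qed.

Lemma psum_rev f n : psum f n = psum (fun j => f (n - 1 - j)%nat) n.
Proof.
  induction n. reflexivity.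
  rewrite (psum_shift_l (fun j => f (S n - 1 - j)%nat)). change (psum f (S n)) with (psum f n + f n).
  replace (S n - 1 - 0)%nat with n by lia.
  rewrite IHn. rewrite Rplus_comm. f_equal.
  apply psum_ext. intros i Hi. f_equal. lia.
Qed.

Lemma psum_switch (F : nat -> nat -> R) n m :
  psum (fun i => psum (fun j => F i j) m) n = psum (fun j => psum (fun i => F i j) n) m.
Proof.
  induction n; simpl. symmetry. apply psum_zero.
  rewrite IHn. rewrite <- psum_plus. reflexivity.
Qed.

Lemma psum_single F k n : psum (fun j => if Nat.eqb j k then F j else 0) n =
  if Nat.ltb k n then F k else 0.
Proof.
  induction n; simpl. reflexivity.
  rewrite IHn. destruct (Nat.eqb_spec n k); destruct (Nat.ltb_spec k n); destruct (Nat.ltb_spec k (S n)); subst; try lia; lra.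
Qed.

Lemma psum_mono f n m : (forall i, 0 <= f i) -> (n <= m)%nat -> psum f n <= psum f m.
Proof.
  intros H Hnm. induction Hnm. lra. simpl. specialize (H m). lra.
Qed.

Lemma psum_ge_term f n k : (forall i, 0 <= f i) -> (k < n)%nat -> f k <= psum f n.
Proof.
  intros H Hk. apply Rle_trans with (psum f (S k)). simpl. assert (0 <= psum f k) by (apply psum_nonneg; auto). lra.
  apply psum_mono; auto.
Qed.

Lemma psum_abs f n : Rabs (psum f n) <= psum (fun i => Rabs (f i)) n.
Proof. induction n; simpl. rewrite Rabs_R0; lra. eapply Rle_trans. apply Rabs_triang. lra. Qed.

Lemma sum_n_psum f N : sum_n f N = psum f (S N).
Proof.
  rewrite sum_n_Reals. induction N; simpl. lra. rewrite IHN. simpl. lra.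
Qed.

Lemma sum_f_psum f n : sum_f_R0 f n = psum f (S n).
Proof. rewrite <- sum_n_Reals. apply sum_n_psum. Qed.

(** * Elementary real bounds *)

Lemma ex_series_bounded (a : nat -> R) B :
  (forall n, 0 <= a n) -> (forall N, psum a N <= B) -> ex_series a /\ Series a <= B.
Proof.
  intros Hpos HB.
  assert (Hinc : forall n, sum_n a n <= sum_n a (S n)).
  { intros n. rewrite !sum_n_psum. simpl. specialize (Hpos (S n)). lra. }
  assert (Hl := Lim_seq_correct _ (ex_lim_seq_incr _ Hinc)).
  set (l := Lim_seq (sum_n a)) in *.
  assert (Hle : Rbar_le l B).
  { apply (is_lim_seq_le (sum_n a) (fun _ => B) l B); auto. intros n. rewrite sum_n_psum. auto. apply is_lim_seq_const. }
  assert (Hge : Rbar_le (sum_n a 0) l).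
  { apply (is_lim_seq_le (fun _ => sum_n a 0) (sum_n a) _ l); auto. intros n. clear -Hinc. induction n. lra. eapply Rle_trans; eauto. apply is_lim_seq_const. }
  destruct l as [l| |]; simpl in Hle, Hge; try tauto.
  split. exists l. exact Hl. rewrite (is_series_unique a l Hl). auto.
Qed.

Lemma partial_le_Series (a : nat -> R) : (forall n, 0 <= a n) -> ex_series a -> forall N, psum a N <= Series a.
Proof.
  intros Hpos Hex N.
  assert (Hinc : forall n, sum_n a n <= sum_n a (S n)).
  { intros n. rewrite !sum_n_psum. simpl. specialize (Hpos (S n)). lra. }
  apply Rle_trans with (sum_n a N). rewrite sum_n_psum. apply psum_mono; auto.
  apply (is_lim_seq_incr_compare (sum_n a)); auto. apply Series_correct. auto.
Qed.

Lemma term_le_Series (a : nat -> R) : (forall n, 0 <= a n) -> ex_series a -> forall n, a n <= Series a.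
Proof.
  intros Hpos Hex n. eapply Rle_trans; [|apply partial_le_Series; eauto]. apply (psum_ge_term a (S n) n); auto.
Qed.

Lemma Series_nonneg (a : nat -> R) : (forall n, 0 <= a n) -> ex_series a -> 0 <= Series a.
Proof. intros. eapply Rle_trans; [|apply (partial_le_Series a H H0 0)]. simpl; lra. Qed.

Lemma psum_geom_le s N : 0 <= s < 1 -> psum (fun j => s ^ j) N <= / (1 - s).
Proof.
  intros Hs. rewrite <- Series_geom by (rewrite Rabs_right; lra).
  apply partial_le_Series. intros; apply pow_le; lra. apply ex_series_geom. rewrite Rabs_right; lra.
Qed.

Lemma Series_zero : Series (fun _ => 0) = 0.
Proof. rewrite (Series_ext _ (fun n => 0 * 1)) by (intros; ring). rewrite Series_scal_l. ring. Qed.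

Lemma pow_le1 s k : 0 <= s <= 1 -> s ^ k <= 1.
Proof. intros Hs. induction k; simpl. lra. assert (0 <= s ^ k) by (apply pow_le; lra). nra. Qed.

Lemma pow_le_base_le1 s a b : 0 <= s <= 1 -> (b <= a)%nat -> s ^ a <= s ^ b.
Proof.
  intros Hs Hab. replace a with (b + (a - b))%nat by lia. rewrite pow_add.
  rewrite <- (Rmult_1_r (s ^ b)) at 2. apply Rmult_le_compat_l. apply pow_le; lra.
  apply pow_le1; lra. Qed.

Lemma pow_S_le_base r j : 0 <= r <= 1 -> r ^ S j <= r.
Proof. intros H. simpl. assert (r ^ j <= 1) by (apply pow_le1; lra). nra. Qed.

Lemma INR_S_pos n : 0 < INR (S n).
Proof. apply lt_0_INR; lia. Qed.

Lemma inv_INR_S_le1 j : / INR (S j) <= 1.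
Proof. rewrite <- Rinv_1. apply Rinv_le_contravar. lra. apply (le_INR 1); lia. Qed.

Lemma inv_INR_S_pos j : 0 < / INR (S j).
Proof. apply Rinv_0_lt_compat, INR_S_pos. Qed.

Lemma exp_le_exp x y : x <= y -> exp x <= exp y.
Proof. intros H. destruct (Req_dec x y). subst; lra. left. apply exp_increasing. lra. Qed.

Lemma xexp_neg_le y : y * exp (- y) <= exp (- 1).
Proof.
  assert (H := exp_ineq1_le (y - 1)).
  assert (E : exp (- 1) = exp (y - 1) * exp (- y)) by (rewrite <- exp_plus; f_equal; ring).
  rewrite E. apply Rmult_le_compat_r. apply Rlt_le, exp_pos. lra.
Qed.

Lemma xexp_neg_antitone a b : 1 <= a <= b -> b * exp (- b) <= a * exp (- a).
Proof.
  intros H. assert (H1 := exp_ineq1_le (b - a)).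
  assert (E : exp (- a) = exp (b - a) * exp (- b)) by (rewrite <- exp_plus; f_equal; ring).
  rewrite E. rewrite <- Rmult_assoc. apply Rmult_le_compat_r. apply Rlt_le, exp_pos.
  nra.
Qed.

Lemma exp_1_ge : 2.44 <= exp 1.
Proof.
  assert (H := exp_ineq1_le (1/4)). set (e := exp (1/4)) in *.
  assert (E : exp 1 = e * e * (e * e)).
  { unfold e. rewrite <- !exp_plus. f_equal. field. }
  rewrite E. assert (H2 : 1.5625 <= e * e) by nra. nra.
Qed.

Lemma sin_sq_le t : sin t * sin t <= t * t.
Proof.
  assert (Hp : forall t, 0 <= t -> sin t * sin t <= t * t).
  { intros s Hs. destruct (Req_dec s 0) as [->|Hs0]. rewrite sin_0; lra.
    assert (H1 : sin s < s) by (apply sin_lt_x; lra).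
    destruct (Rle_dec 0 (sin s)). nra.
    assert (H2 := SIN_bound s).
    destruct (Rle_dec s 1). 
    - assert (0 <= sin s); [|lra]. apply sin_ge_0; try lra. assert (H3 := PI2_1). lra.
    - nra. }
  destruct (Rle_dec 0 t). auto. replace (sin t * sin t) with (sin (-t) * sin (-t)) by (rewrite sin_neg; ring).
  replace (t * t) with ((-t) * (-t)) by ring. apply Hp. lra.
Qed.

Lemma one_minus_cos y : 1 - cos y <= y * y / 2.
Proof.
  replace y with (2 * (y / 2)) at 1 by field. rewrite cos_2a_sin.
  assert (H := sin_sq_le (y / 2)). lra.
Qed.

Lemma Rabs_exp_sub_1 x : Rabs (exp x - 1) <= Rabs x * Rmax 1 (exp x).
Proof.
  destruct (Rle_dec 0 x).
  - rewrite Rmax_right. 2: { assert (H:= exp_ineq1_le x). lra. }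
    rewrite !Rabs_right. 2: lra. 2: { assert (H:= exp_ineq1_le x). lra. }
    assert (H := exp_ineq1_le (- x)). rewrite exp_Ropp in H.
    assert (Hp := exp_pos x).
    assert (x * exp x >= exp x - 1); [|lra].
    apply Rle_ge. apply (Rmult_le_reg_r (/ exp x)). apply Rinv_0_lt_compat; lra.
    replace (x * exp x * / exp x) with x by (field; lra).
    replace ((exp x - 1) * / exp x) with (1 - / exp x) by (field; lra). lra.
  - rewrite Rmax_left. 2: { left. rewrite <- exp_0. apply exp_increasing. lra. }
    assert (H := exp_ineq1_le x). assert (exp x < 1) by (rewrite <- exp_0; apply exp_increasing; lra).
    rewrite Rabs_left by lra. rewrite Rabs_left by lra. lra.
Qed.

(** * Complex series and the complex exponential *)

Lemma Cmod_psum (a : nat -> C) N :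
  Cmod (psum (fun n => Re (a n)) N, psum (fun n => Im (a n)) N) <= psum (fun n => Cmod (a n)) N.
Proof.
  induction N; simpl.
  - change (0, 0) with (RtoC 0). rewrite Cmod_0. lra.
  - replace (psum (fun n => Re (a n)) N + Re (a N), psum (fun n => Im (a n)) N + Im (a N))
      with (Cplus (psum (fun n => Re (a n)) N, psum (fun n => Im (a n)) N) (a N)).
    eapply Rle_trans. apply Cmod_triangle. lra.
    destruct (a N); reflexivity.
Qed.

Lemma Cmod_sq (c : C) : Cmod c * Cmod c = Re c * Re c + Im c * Im c.
Proof. assert (H := Cmod2_alt c). simpl in H. lra. Qed.

Lemma csum_Cmod_le (a : nat -> C) : ex_series (fun n => Cmod (a n)) ->
  ex_series (fun n => Re (a n)) /\ ex_series (fun n => Im (a n)) /\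
  Cmod (csum a) <= Series (fun n => Cmod (a n)).
Proof.
  intros H.
  assert (HR : ex_series (fun n => Re (a n))).
  { apply (ex_series_le (fun n => Re (a n)) (fun n => Cmod (a n))); auto. intros n. apply re_le_Cmod. }
  assert (HI : ex_series (fun n => Im (a n))).
  { apply (ex_series_le (fun n => Im (a n)) (fun n => Cmod (a n))); auto. intros n.
    change (norm (Im (a n))) with (Rabs (Im (a n))). eapply Rle_trans; [apply Rmax_r|apply Rmax_Cmod]. }
  split; auto. split; auto.
  apply Series_correct in HR. apply Series_correct in HI. apply Series_correct in H.
  unfold csum. set (P := Series (fun n => Re (a n))) in *. set (Q := Series (fun n => Im (a n))) in *.
  set (T := Series (fun n => Cmod (a n))) in *.
  assert (HT : 0 <= T).
  { assert (Hl := is_lim_seq_le (fun _ => 0) (sum_n (fun n => Cmod (a n))) 0 T). simpl in Hl. apply Hl.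
    intros N. rewrite sum_n_psum. apply psum_nonneg. intros; apply Cmod_ge_0. apply is_lim_seq_const. exact H. }
  assert (Hle : Rbar_le (P * P + Q * Q) (T * T)).
  { apply (is_lim_seq_le (fun N => sum_n (fun n => Re (a n)) N * sum_n (fun n => Re (a n)) N + sum_n (fun n => Im (a n)) N * sum_n (fun n => Im (a n)) N)
      (fun N => sum_n (fun n => Cmod (a n)) N * sum_n (fun n => Cmod (a n)) N)).
    - intros N. rewrite !sum_n_psum. assert (E := Cmod_sq (psum (fun n => Re (a n)) (S N), psum (fun n => Im (a n)) (S N))). cbn [Re Im fst snd] in E. rewrite <- E.
      assert (H1 := Cmod_psum a (S N)). assert (H2 := Cmod_ge_0 (psum (fun n => Re (a n)) (S N), psum (fun n => Im (a n)) (S N))).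
      apply Rmult_le_compat; auto.
    - apply (is_lim_seq_plus' _ _ (P*P) (Q*Q)); apply is_lim_seq_mult'; auto.
    - apply is_lim_seq_mult'; auto. }
  simpl in Hle.
  assert (Cmod (P, Q) * Cmod (P, Q) <= T * T) by (rewrite Cmod_sq; simpl; lra).
  assert (HH0 := Cmod_ge_0 (P, Q)). nra.
Qed.

Lemma csum_dominated (a : nat -> C) (b : nat -> R) :
  (forall n, Cmod (a n) <= b n) -> ex_series b ->
  ex_series (fun n => Re (a n)) /\ ex_series (fun n => Im (a n)) /\ Cmod (csum a) <= Series b.
Proof.
  intros Hab Hb.
  assert (Hex : ex_series (fun n => Cmod (a n))).
  { apply (ex_series_le (fun n => Cmod (a n)) b); auto. intros n. change (norm (Cmod (a n))) with (Rabs (Cmod (a n))).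
    rewrite Rabs_right by (apply Rle_ge, Cmod_ge_0). auto. }
  destruct (csum_Cmod_le a Hex) as (HR & HI & Hle). repeat split; auto.
  eapply Rle_trans. apply Hle. apply Series_le; auto. intros n; split; auto. apply Cmod_ge_0.
Qed.

Lemma csum_geometric_le (a : nat -> C) c r : 0 <= r < 1 ->
  (forall n, Cmod (a n) <= c * r ^ n) -> Cmod (csum a) <= c / (1 - r).
Proof.
  intros Hr Ha.
  assert (Hgeo : ex_series (fun n => c * r ^ n)).
  { apply (ex_series_scal_l c (fun n => r ^ n)). apply ex_series_geom. rewrite Rabs_right; lra. }
  destruct (csum_dominated a _ Ha Hgeo) as (_ & _ & Hle).
  rewrite Series_scal_l, Series_geom in Hle by (rewrite Rabs_right; lra). exact Hle.
Qed.

Lemma csum_plus (a b : nat -> C) :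
  ex_series (fun n => Re (a n)) -> ex_series (fun n => Im (a n)) ->
  ex_series (fun n => Re (b n)) -> ex_series (fun n => Im (b n)) ->
  csum (fun n => Cplus (a n) (b n)) = Cplus (csum a) (csum b).
Proof.
  intros H1 H2 H3 H4.
  transitivity ((Series (fun n => Re (a n)) + Series (fun n => Re (b n)), Series (fun n => Im (a n)) + Series (fun n => Im (b n)))).
  - unfold csum. f_equal; rewrite <- Series_plus; auto; apply Series_ext; intros n; destruct (a n), (b n); reflexivity.
  - reflexivity.
Qed.

Lemma csum_ext (a b : nat -> C) : (forall n, a n = b n) -> csum a = csum b.
Proof. intros H. unfold csum. f_equal; apply Series_ext; intros; rewrite H; auto. Qed.

Lemma Cexp_add a b : Cexp (Cplus a b) = Cmult (Cexp a) (Cexp b).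
Proof.
  unfold Cexp, Cplus, Cmult. destruct a as [x y]; destruct b as [u v]; simpl.
  rewrite exp_plus, cos_plus, sin_plus. f_equal; ring.
Qed.

Lemma Cmod_Cexp a : Cmod (Cexp a) = exp (Re a).
Proof.
  unfold Cmod, Cexp. cbn [fst snd].
  assert (E : (exp (Re a) * cos (Im a)) ^ 2 + (exp (Re a) * sin (Im a)) ^ 2 = exp (Re a) ^ 2).
  { assert (H := sin2_cos2 (Im a)). unfold Rsqr in H. simpl. nra. }
  rewrite E. apply sqrt_pow2. apply Rlt_le, exp_pos.
Qed.

Lemma Cmod_Cexp_sub_1 a : Cmod (Cminus (Cexp a) (RtoC 1)) <= Cmod a * Rmax 1 (exp (Re a)).
Proof.
  destruct a as [x y]. unfold Cexp, Cminus, Cplus, Copp, RtoC. simpl.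
  set (m := Rmax 1 (exp x)).
  assert (Hm1 : 1 <= m) by apply Rmax_l. assert (Hme : exp x <= m) by apply Rmax_r.
  assert (Hep := exp_pos x).
  apply Rsqr_incr_0_var. 2: { apply Rmult_le_pos. apply Cmod_ge_0. lra. }
  unfold Rsqr. rewrite Rmult_comm with (r1 := Cmod (x,y)).
  replace (m * Cmod (x, y) * (m * Cmod (x, y))) with (m * m * (Cmod (x,y) * Cmod (x,y))) by ring.
  rewrite !Cmod_sq. simpl.
  assert (E : (exp x * cos y + - (1)) * (exp x * cos y + - (1)) + (exp x * sin y + - 0) * (exp x * sin y + - 0)
             = (exp x - 1) * (exp x - 1) + 2 * exp x * (1 - cos y)).
  { assert (H := sin2_cos2 y). unfold Rsqr in H. nra. }
  rewrite E.
  assert (H1 := Rabs_exp_sub_1 x). fold m in H1.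
  assert (H1' : (exp x - 1) * (exp x - 1) <= x * x * (m * m)).
  { assert (Rabs (exp x - 1) * Rabs (exp x - 1) <= (Rabs x * m) * (Rabs x * m)).
    { apply Rmult_le_compat; try apply Rabs_pos; exact H1. }
    assert (Ea : Rabs (exp x - 1) * Rabs (exp x - 1) = (exp x - 1) * (exp x - 1)) by (rewrite <- Rabs_mult; apply Rabs_right; apply Rle_ge, Rle_0_sqr).
    assert (Ex : Rabs x * Rabs x = x * x) by (rewrite <- Rabs_mult; apply Rabs_right; apply Rle_ge, Rle_0_sqr).
    nra. }
  assert (H2 := one_minus_cos y).
  assert (0 <= 1 - cos y) by (assert (H := COS_bound y); lra).
  assert (2 * exp x * (1 - cos y) <= m * m * (y * y)).
  { apply Rle_trans with (2 * m * (y * y / 2)). apply Rmult_le_compat; try nra. nra. }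
  nra.
Qed.

Lemma Re_RtoC_mult a w : Re (Cmult (RtoC a) w) = a * Re w.
Proof. unfold Cmult, RtoC, Re, Im. simpl. ring. Qed.
Lemma Im_RtoC_mult a w : Im (Cmult (RtoC a) w) = a * Im w.
Proof. unfold Cmult, RtoC, Re, Im. simpl. ring. Qed.
Lemma Re_div_R w k : k <> 0 -> Re (Cdiv w (RtoC k)) = Re w / k.
Proof. intros Hk. unfold Cdiv, Cmult, Cinv, RtoC, Re, Im. simpl. field. auto. Qed.
Lemma Im_div_R w k : k <> 0 -> Im (Cdiv w (RtoC k)) = Im w / k.
Proof. intros Hk. unfold Cdiv, Cmult, Cinv, RtoC, Re, Im. simpl. field. auto. Qed.

Lemma Rabs_Re_Cpow_le (z : C) n : Rabs (Re (Cpow z n)) <= Cmod z ^ n.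
Proof. eapply Rle_trans. apply re_le_Cmod. rewrite Cmod_pow. lra. Qed.
Lemma Rabs_Im_Cpow_le (z : C) n : Rabs (Im (Cpow z n)) <= Cmod z ^ n.
Proof. eapply Rle_trans. 2: { rewrite <- Cmod_pow. apply Rle_refl. }
  eapply Rle_trans; [apply Rmax_r|apply Rmax_Cmod]. Qed.

Lemma Cmod_div_R w k : 0 < k -> Cmod (Cdiv w (RtoC k)) = Cmod w / k.
Proof. intros Hk. rewrite Cmod_div. rewrite Cmod_R, Rabs_right by lra. auto.
  intros H. injection H. lra. Qed.

Lemma Cmod_RtoC_nonneg w : 0 <= w -> Cmod (RtoC w) = w.
Proof. intros H. rewrite Cmod_R. apply Rabs_right. lra. Qed.

Lemma Cmod_Cpow_sub_1 (v : C) n : Cmod v <= 1 -> Cmod (Cminus (Cpow v n) (RtoC 1)) <= INR n * Cmod (Cminus v (RtoC 1)).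
Proof.
  intros Hv. induction n. simpl. replace (Cminus 1 1) with (RtoC 0) by (unfold Cminus; ring). rewrite Cmod_0. lra.
  replace (Cminus (Cpow v (S n)) (RtoC 1)) with (Cplus (Cmult v (Cminus (Cpow v n) (RtoC 1))) (Cminus v (RtoC 1))) by (simpl; unfold Cminus; ring).
  eapply Rle_trans. apply Cmod_triangle. rewrite Cmod_mult. rewrite S_INR.
  assert (0 <= Cmod (Cminus (Cpow v n) (RtoC 1))) by apply Cmod_ge_0.
  assert (Cmod v * Cmod (Cminus (Cpow v n) (RtoC 1)) <= Cmod (Cminus (Cpow v n) (RtoC 1))) by nra.
  lra.
Qed.

Lemma Cmod_Cpow_sub_1_div (v : C) j : Cmod v <= 1 -> Cmod (Cminus (Cpow v (S j)) (RtoC 1)) / INR (S j) <= Cmod (Cminus v (RtoC 1)).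
Proof.
  intros Hv. assert (H := Cmod_Cpow_sub_1 v (S j) Hv). assert (Hp := INR_S_pos j).
  apply (Rmult_le_reg_r (INR (S j))). auto. unfold Rdiv. rewrite Rmult_assoc, Rinv_l by lra. lra.
Qed.

(** * Power series *)

Lemma CV_radius_gt_unit_disk (a b : nat -> R) (m s : R) :
  (forall n, Rabs (a n) <= b n * m ^ n) -> (forall n, 0 <= b n) ->
  ex_series (fun n => b n * s ^ n) -> 0 <= m < s ->
  forall t, Rabs t <= 1 -> Rbar_lt (Rabs t) (CV_radius a).
Proof.
  intros Hab Hb Hex Hms t Ht.
  set (r := 2 * s / (m + s)).
  assert (Hr1 : 1 < r). { unfold r. apply (Rmult_lt_reg_r (m + s)). lra. unfold Rdiv. rewrite Rmult_assoc, Rinv_l; lra. }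
  assert (Hmr : m * r <= s). { unfold r. apply (Rmult_le_reg_r (m + s)). lra. unfold Rdiv. 
    replace (m * (2 * s * / (m + s)) * (m + s)) with (2 * s * m) by (field; lra). nra. }
  assert (Hr0 : 0 <= r) by lra.
  destruct (CV_radius_bounded a) as [Hub _].
  assert (Hle : Rbar_le r (CV_radius a)).
  { apply Hub. exists (Series (fun n => b n * s ^ n)). intros n.
    rewrite Rabs_mult. rewrite (Rabs_right (r ^ n)) by (apply Rle_ge, pow_le; lra).
    apply Rle_trans with (b n * m ^ n * r ^ n). apply Rmult_le_compat_r. apply pow_le; lra. auto.
    apply Rle_trans with (b n * s ^ n).
    rewrite Rmult_assoc, <- Rpow_mult_distr. apply Rmult_le_compat_l; auto. apply pow_incr. split; [nra|auto].
    apply (term_le_Series (fun n => b n * s ^ n)); auto. intros k; apply Rmult_le_pos; auto. apply pow_le; lra. }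
  destruct (CV_radius a) as [R| |]; simpl in *; lra || auto.
Qed.

Lemma ex_series_of_CV_radius (a : nat -> R) : Rbar_lt 1 (CV_radius a) -> ex_series a.
Proof.
  intros H. rewrite <- Rabs_R1 in H. apply CV_disk_inside in H. apply ex_series_Rabs.
  eapply ex_series_ext; [|exact H]. intros n. simpl. rewrite pow1, Rmult_1_r. reflexivity.
Qed.

Lemma PS_mult_psum a b n : PS_mult a b n = psum (fun k => a k * b (n - k)%nat) (S n).
Proof. unfold PS_mult. apply sum_f_psum. Qed.

Lemma ex_pseries_mult_derive a b t : Rabs t <= 1 -> (forall t, Rabs t <= 1 -> Rbar_lt (Rabs t) (CV_radius a)) ->
  (forall t, Rabs t <= 1 -> Rbar_lt (Rabs t) (CV_radius b)) -> ex_pseries (PS_mult (PS_derive a) b) t.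
Proof. intros Ht Ha Hb. apply ex_pseries_mult. rewrite CV_radius_derive. auto. auto. Qed.

Lemma PSeries_mult_derive a b t : Rabs t <= 1 -> (forall t, Rabs t <= 1 -> Rbar_lt (Rabs t) (CV_radius a)) ->
  (forall t, Rabs t <= 1 -> Rbar_lt (Rabs t) (CV_radius b)) -> PSeries (PS_mult (PS_derive a) b) t = PSeries (PS_derive a) t * PSeries b t.
Proof. intros Ht Ha Hb. apply PSeries_mult. rewrite CV_radius_derive. auto. auto. Qed.

Lemma derive_0_const_01 (h : R -> R) : (forall t, Rabs t <= 1 -> is_derive h t 0) -> h 1 = h 0.
Proof.
  intros Hd.
  destruct (MVT_gen h 0 1 (fun _ => 0)) as [c [_ Hc]].
  - intros x Hx. apply Hd. rewrite Rmin_left, Rmax_right in Hx by lra. rewrite Rabs_right; lra.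
  - intros x Hx. rewrite Rmin_left, Rmax_right in Hx by lra.
    assert (H := Hd x ltac:(rewrite Rabs_right; lra)). apply is_derive_Reals in H.
    apply (derivable_continuous_pt h x (exist _ 0 H)).
  - lra.
Qed.

Lemma PSeries_at_1 a : PSeries a 1 = Series a.
Proof. unfold PSeries. apply Series_ext. intros n. rewrite pow1. ring. Qed.

(** * The Otter recurrence *)

Definition conv (u v : nat -> R) (n : nat) : R := psum (fun j => u j * v (n - j)%nat) (S n).

Lemma conv_comm u v n : conv u v n = conv v u n.
Proof.
  unfold conv. rewrite psum_rev. apply psum_ext. intros i Hi.
  replace (S n - 1 - i)%nat with (n - i)%nat by lia.
  replace (n - (n - i))%nat with i by lia. lra.
Qed.

Lemma psum_from (F : nat -> R) j n : (j <= n)%nat ->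
  psum (fun i => if Nat.leb j i then F i else 0) (S n) = psum (fun l => F (j + l)%nat) (S (n - j)).
Proof.
  intros H. replace (S n) with (j + S (n - j))%nat by lia.
  rewrite psum_split. rewrite (psum_ext _ (fun _ => 0)).
  rewrite psum_zero, Rplus_0_l. apply psum_ext. intros i Hi.
  destruct (Nat.leb_spec j (j+i)); [reflexivity| lia].
  intros i Hi. destruct (Nat.leb_spec j i); [lia|reflexivity].
Qed.

Lemma conv_assoc u v w n : conv (conv u v) w n = conv u (conv v w) n.
Proof.
  unfold conv.
  transitivity (psum (fun i => psum (fun j => if Nat.leb j i then u j * v (i - j)%nat * w (n - i)%nat else 0) (S n)) (S n)).
  - apply psum_ext. intros i Hi.
    replace (S n) with (S i + (n - i))%nat by lia.
    rewrite psum_split. rewrite (psum_ext (fun l => if Nat.leb (S i + l) i then _ else 0) (fun _ => 0)).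
    rewrite psum_zero, Rplus_0_r. rewrite Rmult_comm, <- psum_scal. apply psum_ext. intros j Hj.
    destruct (Nat.leb_spec j i); [lra|lia].
    intros l _. destruct (Nat.leb_spec (S i + l) i); [lia|reflexivity].
  - rewrite psum_switch. apply psum_ext. intros j Hj.
    rewrite (psum_from (fun i => u j * v (i - j)%nat * w (n - i)%nat)) by lia.
    rewrite <- psum_scal. apply psum_ext. intros l Hl.
    replace (j + l - j)%nat with l by lia. replace (n - (j + l))%nat with (n - j - l)%nat by lia. lra.
Qed.

Lemma conv_plus_l u v w n : conv (fun i => u i + v i) w n = conv u w n + conv v w n.
Proof. unfold conv. rewrite <- psum_plus. apply psum_ext; intros; lra. Qed.

Lemma conv_scal_l c u w n : conv (fun i => c * u i) w n = c * conv u w n.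
Proof. unfold conv. rewrite <- psum_scal. apply psum_ext; intros; lra. Qed.

Lemma conv_ext u u' v v' n : (forall i, u i = u' i) -> (forall i, v i = v' i) -> conv u v n = conv u' v' n.
Proof. intros H1 H2. unfold conv. apply psum_ext. intros. rewrite H1, H2. auto. Qed.

Lemma conv_ext_l u u' v n : (forall i, u i = u' i) -> conv u v n = conv u' v n.
Proof. intros H. apply conv_ext; auto. Qed.

Definition delta (n : nat) : R := if Nat.eqb n 0 then 1 else 0.

Lemma conv_delta_l u n : conv delta u n = u n.
Proof.
  unfold conv, delta. rewrite (psum_ext _ (fun j => if Nat.eqb j 0 then u (n - j)%nat else 0)).
  rewrite psum_single. simpl. f_equal. lia.
  intros i _. destruct (Nat.eqb i 0); lra.
Qed.

(* [theta u] is the coefficient sequence of x u'(x), so [theta u = conv beta u]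
   says that beta is the coefficient sequence of x u'/u. *)
Definition theta (u : nat -> R) (n : nat) : R := INR n * u n.

Lemma theta_conv u v n : theta (conv u v) n = conv (theta u) v n + conv u (theta v) n.
Proof.
  unfold theta, conv. rewrite <- psum_plus. rewrite <- psum_scal. apply psum_ext.
  intros i Hi. rewrite (minus_INR n i) by lia. ring.
Qed.

Lemma theta_conv_logder u v be ga :
  (forall n, theta u n = conv be u n) -> (forall n, theta v n = conv ga v n) ->
  forall n, theta (conv u v) n = conv (fun i => be i + ga i) (conv u v) n.
Proof.
  intros Hu Hv n. rewrite theta_conv, conv_plus_l. f_equal.
  - rewrite (conv_ext_l _ _ _ _ Hu). apply conv_assoc.
  - rewrite conv_comm, (conv_ext_l _ _ _ _ Hv), conv_assoc. apply conv_ext; [reflexivity| intro; apply conv_comm].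
Qed.

(* Coefficients of 1/(1 - x^k), of 1 - x^k, and of x (d/dx) log (1/(1 - x^k)). *)
Definition geomk (k n : nat) : R := if Nat.eqb (n mod k) 0 then 1 else 0.
Definition binomk (k n : nat) : R := delta n + (-1) * (if Nat.eqb n k then 1 else 0).
Definition logder_geomk (k n : nat) : R :=
  if Nat.eqb n 0 then 0 else if Nat.eqb (n mod k) 0 then INR k else 0.

Lemma conv_shift k (f : nat -> R) n :
  conv (fun i => if Nat.eqb i k then 1 else 0) f n = if Nat.leb k n then f (n - k)%nat else 0.
Proof.
  unfold conv. rewrite (psum_ext _ (fun j => if Nat.eqb j k then f (n - j)%nat else 0)).
  rewrite psum_single. destruct (Nat.ltb_spec k (S n)); destruct (Nat.leb_spec k n); try lia; auto.
  intros i _. destruct (Nat.eqb i k); lra.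
Qed.

Lemma mod_sub_divisor k n : (0 < k)%nat -> (k <= n)%nat -> (n mod k = (n - k) mod k)%nat.
Proof.
  intros Hk Hn. replace n with ((n - k) + 1 * k)%nat at 1 by lia.
  apply Nat.Div0.mod_add.
Qed.

Lemma conv_binomk_geomk k n : (0 < k)%nat -> conv (binomk k) (geomk k) n = delta n.
Proof.
  intros Hk. unfold binomk. rewrite conv_plus_l, conv_scal_l, conv_delta_l, conv_shift.
  unfold geomk, delta. destruct (Nat.leb_spec k n).
  - rewrite <- mod_sub_divisor by lia. destruct (Nat.eqb_spec n 0); [lia|].
    destruct (Nat.eqb (n mod k) 0); lra.
  - rewrite Nat.mod_small by lia. destruct (Nat.eqb n 0); lra.
Qed.

Lemma theta_delta n : theta delta n = 0.
Proof. unfold theta, delta. destruct (Nat.eqb_spec n 0); subst; simpl; lra. Qed.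

Lemma theta_binomk k n : theta (binomk k) n = (- INR k) * (if Nat.eqb n k then 1 else 0).
Proof.
  unfold theta, binomk, delta. destruct (Nat.eqb_spec n 0); destruct (Nat.eqb_spec n k); subst; simpl; try lra.
Qed.

Lemma theta_geomk k : (0 < k)%nat -> forall n, theta (geomk k) n = conv (logder_geomk k) (geomk k) n.
Proof.
  intros Hk n.
  assert (H0 : forall m, conv (theta (binomk k)) (geomk k) m + conv (binomk k) (theta (geomk k)) m = 0).
  { intros m. rewrite <- theta_conv. unfold theta. rewrite conv_binomk_geomk by auto. apply theta_delta. }
  rewrite <- (conv_delta_l (theta (geomk k))).
  rewrite (conv_ext_l _ (conv (geomk k) (binomk k))) by (intros; rewrite conv_comm, conv_binomk_geomk; auto).
  rewrite conv_assoc. rewrite conv_comm.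
  apply conv_ext_l. intros m.
  assert (E := H0 m). rewrite (conv_ext_l _ (fun i => (- INR k) * (if Nat.eqb i k then 1 else 0))) in E by apply theta_binomk.
  rewrite conv_scal_l, conv_shift in E.
  assert (E2 : conv (binomk k) (theta (geomk k)) m = INR k * (if Nat.leb k m then geomk k (m - k) else 0)) by lra.
  rewrite E2. unfold logder_geomk, geomk. destruct (Nat.leb_spec k m).
  - rewrite <- mod_sub_divisor by lia. destruct (Nat.eqb_spec m 0); [lia|]. destruct (Nat.eqb (m mod k) 0); lra.
  - destruct (Nat.eqb_spec m 0). lra. rewrite Nat.mod_small by lia. destruct (Nat.eqb_spec m 0); [lia|]. lra.
Qed.

Fixpoint geomk_pow (k a : nat) : nat -> R :=
  match a with O => delta | S a' => fun n => conv (geomk_pow k a') (geomk k) n end.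

Lemma theta_geomk_pow k a : (0 < k)%nat -> forall n, theta (geomk_pow k a) n = conv (fun i => INR a * logder_geomk k i) (geomk_pow k a) n.
Proof.
  intros Hk. induction a; intros n.
  - simpl. rewrite theta_delta, conv_scal_l. lra.
  - simpl geomk_pow. rewrite (theta_conv_logder _ _ _ _ IHa (theta_geomk k Hk)).
    apply conv_ext_l. intros i. rewrite S_INR. lra.
Qed.

Definition ycoef (n : nat) : R := INR (tree_count n).

(* [tree_count] divides by n with truncation; exactness of that division comes from
   identifying the quotient with a coefficient of the Euler product
   prod_(k <= M) (1 - x^k)^(-y_k), whose coefficients are natural numbers and whose
   logarithmic derivative has coefficients b_n for n <= M. *)
Fixpoint euler_prod (M : nat) : nat -> R :=
  match M with O => delta | S M' => fun n => conv (euler_prod M') (geomk_pow (S M') (tree_count (S M'))) n end.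

Definition euler_logder (M i : nat) : R := psum (fun k => ycoef (S k) * logder_geomk (S k) i) M.

Lemma theta_euler_prod M : forall n, theta (euler_prod M) n = conv (euler_logder M) (euler_prod M) n.
Proof.
  induction M; intros n.
  - simpl. rewrite theta_delta. unfold euler_logder. simpl. rewrite (conv_ext_l _ (fun i => 0 * delta i)). rewrite conv_scal_l; lra.
    intros; lra.
  - simpl euler_prod. rewrite (theta_conv_logder _ _ _ _ IHM (theta_geomk_pow (S M) (tree_count (S M)) (Nat.lt_0_succ M))).
    apply conv_ext_l. intros i. unfold euler_logder. simpl. unfold ycoef. reflexivity.
Qed.

Definition is_nat (x : R) := exists m : nat, x = INR m.

Lemma is_nat_psum f n : (forall i, is_nat (f i)) -> is_nat (psum f n).
Proof.
  intros H. induction n; simpl. exists O; auto.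
  destruct IHn as [a Ha]. destruct (H n) as [b Hb]. exists (a + b)%nat. rewrite plus_INR. lra.
Qed.

Lemma is_nat_conv u v n : (forall i, is_nat (u i)) -> (forall i, is_nat (v i)) -> is_nat (conv u v n).
Proof.
  intros Hu Hv. unfold conv. apply is_nat_psum. intros i.
  destruct (Hu i) as [a Ha]. destruct (Hv (n - i)%nat) as [b Hb]. exists (a * b)%nat. rewrite mult_INR, Ha, Hb. reflexivity.
Qed.

Lemma is_nat_delta n : is_nat (delta n).
Proof. unfold delta. destruct (Nat.eqb n 0). exists 1%nat; auto. exists O; auto. Qed.

Lemma is_nat_geomk k n : is_nat (geomk k n).
Proof. unfold geomk. destruct (Nat.eqb _ 0). exists 1%nat; auto. exists O; auto. Qed.

Lemma is_nat_geomk_pow k a n : is_nat (geomk_pow k a n).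
Proof. revert n; induction a; intros n; simpl. apply is_nat_delta. apply is_nat_conv; auto. apply is_nat_geomk. Qed.

Lemma is_nat_euler_prod M n : is_nat (euler_prod M n).
Proof. revert n; induction M; intros n; simpl. apply is_nat_delta. apply is_nat_conv; auto. intros; apply is_nat_geomk_pow. Qed.

Lemma conv_0 u v : conv u v 0 = u O * v O.
Proof. unfold conv. simpl. lra. Qed.

Lemma geomk_pow_0 k a : geomk_pow k a 0 = 1.
Proof. induction a; simpl. reflexivity. rewrite conv_0, IHa. unfold geomk. rewrite Nat.Div0.mod_0_l. simpl. lra. Qed.

Lemma euler_prod_0 M : euler_prod M 0 = 1.
Proof. induction M; simpl. reflexivity. rewrite conv_0, IHM, geomk_pow_0. lra. Qed.

Definition bcoef (l : nat) : R :=
  psum (fun d => if Nat.eqb (l mod (S d)) 0 then INR (S d) * ycoef (S d) else 0) l.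

Lemma euler_logder_0 M : euler_logder M 0 = 0.
Proof. unfold euler_logder. rewrite (psum_ext _ (fun _ => 0)). apply psum_zero. intros; unfold logder_geomk; simpl; lra. Qed.

Lemma euler_logder_bcoef M l : (1 <= l <= M)%nat -> euler_logder M l = bcoef l.
Proof.
  intros H. unfold euler_logder, bcoef. replace M with (l + (M - l))%nat by lia.
  rewrite psum_split. rewrite (psum_ext (fun l0 => ycoef (S (l + l0)) * logder_geomk (S (l + l0)) l) (fun _ => 0)). rewrite psum_zero, Rplus_0_r.
  - apply psum_ext. intros i Hi. unfold logder_geomk. destruct (Nat.eqb_spec l 0); [lia|].
    destruct (Nat.eqb (l mod S i) 0); lra.
  - intros i _. unfold logder_geomk. destruct (Nat.eqb_spec l 0); [lia|].
    rewrite Nat.mod_small by lia. destruct (Nat.eqb_spec l 0); [lia|]. lra.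
Qed.

Lemma count_list_length m : length (count_list m) = S m.
Proof. induction m; simpl. reflexivity. rewrite length_app, IHm. simpl. lia. Qed.

Lemma nth_count_list i m : (i <= m)%nat -> nth i (count_list m) 0%nat = tree_count i.
Proof.
  intros H. induction H. reflexivity.
  simpl. rewrite app_nth1. auto. rewrite count_list_length. lia.
Qed.

Lemma tree_count_S m : tree_count (S m) = next_count (count_list m).
Proof.
  unfold tree_count. simpl. rewrite app_nth2; rewrite count_list_length. 2: lia.
  rewrite Nat.sub_diag. reflexivity.
Qed.

Lemma fold_seq (g : nat -> nat) s len :
  INR (fold_right Nat.add 0%nat (map g (seq s len))) = psum (fun i => INR (g (s + i)%nat)) len.
Proof.
  revert s; induction len; intros s. reflexivity.
  simpl seq. simpl map. simpl fold_right. rewrite plus_INR, IHlen.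
  rewrite psum_shift_l. rewrite Nat.add_0_r. f_equal.
  apply psum_ext. intros. f_equal. f_equal. lia.
Qed.

Lemma divsum_bcoef k m : (k <= m)%nat -> INR (divsum (count_list m) k) = bcoef k.
Proof.
  intros H. unfold divsum. rewrite fold_seq. unfold bcoef. apply psum_ext. intros i Hi.
  simpl (1 + i)%nat. destruct (Nat.eqb (k mod S i) 0).
  rewrite mult_INR, nth_count_list by lia. reflexivity. reflexivity.
Qed.

Lemma tree_count_euler_prod M : forall m, (m <= M)%nat -> INR (tree_count (S m)) = euler_prod M m.
Proof.
  intros m. induction m as [m IH] using (well_founded_induction lt_wf). intros Hm.
  destruct m as [|m'].
  - rewrite euler_prod_0. reflexivity.
  - set (m := S m').
    assert (Hnum : INR (fold_right Nat.add 0%nat (map (fun k => (divsum (count_list m) k * nth (m - k + 1) (count_list m) 0)%nat) (seq 1 m))) = INR m * euler_prod M m).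
    { rewrite fold_seq.
      assert (HD := theta_euler_prod M m). unfold theta in HD. rewrite HD. unfold conv.
      rewrite psum_shift_l. rewrite euler_logder_0, Rmult_0_l, Rplus_0_l.
      apply psum_ext. intros i Hi. rewrite mult_INR. rewrite divsum_bcoef by lia.
      rewrite euler_logder_bcoef by lia. f_equal. rewrite nth_count_list by lia.
      replace (m - (1 + i) + 1)%nat with (S (m - S i)) by lia.
      apply IH; lia. }
    destruct (is_nat_euler_prod M m) as [p Hp]. rewrite Hp in Hnum. rewrite <- mult_INR in Hnum.
    apply INR_eq in Hnum. rewrite Hp. f_equal.
    rewrite tree_count_S. unfold next_count. rewrite count_list_length.
    unfold m in Hnum |- *. simpl length. 
    change (match S (S m') with 0 => 0 | 1 => 1 | S n => Nat.div (fold_right Nat.add 0 (map (fun k => (divsum (count_list (S m')) k * nth (n - k + 1) (count_list (S m')) 0)%nat) (seq 1 n))) n end)%nat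
      with (Nat.div (fold_right Nat.add 0 (map (fun k => (divsum (count_list (S m')) k * nth (S m' - k + 1) (count_list (S m')) 0)%nat) (seq 1 (S m')))) (S m'))%nat.
    rewrite Hnum. rewrite Nat.mul_comm. apply Nat.div_mul. lia.
Qed.

Lemma ycoef_recurrence m : INR m * ycoef (S m) = psum (fun i => bcoef (S i) * ycoef (m - i)%nat) m.
Proof.
  unfold ycoef. rewrite (tree_count_euler_prod m m) by lia.
  assert (HD := theta_euler_prod m m). unfold theta in HD. rewrite HD. unfold conv.
  rewrite psum_shift_l. rewrite euler_logder_0, Rmult_0_l, Rplus_0_l.
  apply psum_ext. intros i Hi. rewrite euler_logder_bcoef by lia. f_equal.
  replace (m - i)%nat with (S (m - S i)) by lia. symmetry. apply tree_count_euler_prod. lia.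
Qed.

Lemma ycoef_nonneg n : 0 <= ycoef n.
Proof. apply pos_INR. Qed.

Lemma bcoef_nonneg l : 0 <= bcoef l.
Proof. unfold bcoef. apply psum_nonneg. intros i _. destruct (Nat.eqb _ 0). apply Rmult_le_pos; [apply pos_INR|apply ycoef_nonneg]. lra. Qed.

Lemma ycoef_recurrence_S n : INR (S n) * ycoef (S (S n)) = psum (fun k => bcoef (S k) * ycoef (S (n - k))) (S n).
Proof. rewrite ycoef_recurrence. apply psum_ext. intros i Hi. f_equal. f_equal. lia. Qed.

Lemma ycoef_1 : ycoef 1 = 1.
Proof. unfold ycoef. replace (tree_count 1) with 1%nat by reflexivity. reflexivity. Qed.

Lemma ycoef_0 : ycoef 0 = 0.
Proof. unfold ycoef. replace (tree_count 0) with 0%nat by reflexivity. reflexivity. Qed.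

Lemma ycoef_ge1 n : (1 <= n)%nat -> 1 <= ycoef n.
Proof.
  intros Hn. induction Hn. rewrite ycoef_1; lra.
  assert (HR := ycoef_recurrence m). 
  assert (Hm : 0 < INR m) by (apply lt_0_INR; lia).
  assert (H1 : bcoef m * ycoef 1 <= psum (fun i => bcoef (S i) * ycoef (m - i)%nat) m).
  { assert (E : bcoef m * ycoef 1 = (fun i => bcoef (S i) * ycoef (m - i)%nat) (m - 1)%nat).
    { cbv beta. replace (S (m - 1)) with m by lia. replace (m - (m - 1))%nat with 1%nat by lia. reflexivity. }
    rewrite E. apply (psum_ge_term (fun i => bcoef (S i) * ycoef (m - i)%nat)). intros; apply Rmult_le_pos; auto using bcoef_nonneg, ycoef_nonneg. lia. }
  assert (H2 : INR m * ycoef m <= bcoef m).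
  { unfold bcoef. assert (E : INR m * ycoef m = (fun d => if Nat.eqb (m mod S d) 0 then INR (S d) * ycoef (S d) else 0) (m - 1)%nat).
    { cbv beta. replace (S (m - 1)) with m by lia. rewrite Nat.Div0.mod_same. reflexivity. }
    rewrite E. apply (psum_ge_term (fun d => if Nat.eqb (m mod S d) 0 then INR (S d) * ycoef (S d) else 0)). intros i. destruct (Nat.eqb _ 0). apply Rmult_le_pos; auto using pos_INR, ycoef_nonneg. lra. lia. }
  rewrite ycoef_1 in H1. nra.
Qed.

(** * The radius of convergence *)

Lemma psum_inv_sq_le n : (1 <= n)%nat -> psum (fun i => / (INR (S i) * INR (S i))) n <= 2 - / INR n.
Proof.
  intros Hn. induction Hn. simpl. lra.
  cbn [psum]. assert (H1 : 0 < INR m) by (apply lt_0_INR; lia).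
  rewrite S_INR. set (a := INR m) in *.
  assert (E : / a - / (a + 1) = / (a * (a + 1))) by (field; lra).
  assert (/ ((a + 1) * (a + 1)) <= / (a * (a + 1))).
  { apply Rinv_le_contravar. nra. nra. }
  lra.
Qed.

Lemma psum_16_pow_div_le k : (1 <= k)%nat ->
  psum (fun d => 16 ^ (S d) / INR (S d)) k <= 2 * 16 ^ k / INR k.
Proof.
  intros Hk. induction Hk. simpl. lra.
  cbn [psum]. assert (H1 : 0 < INR m) by (apply lt_0_INR; lia).
  assert (H16 : 0 < 16 ^ m) by (apply pow_lt; lra).
  rewrite S_INR. set (a := INR m) in *. set (p := 16 ^ m) in *.
  assert (2 * p / a + 16 * p / (a + 1) <= 2 * (16 * p) / (a + 1)).
  { assert (1 <= a). { unfold a. apply (le_INR 1). auto. }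
    unfold Rdiv. apply (Rmult_le_reg_r (a * (a + 1))). nra.
    replace ((2 * p * / a + 16 * p * / (a + 1)) * (a * (a + 1))) with (2 * p * (a + 1) + 16 * p * a) by (field; lra).
    replace (2 * (16 * p) * / (a + 1) * (a * (a + 1))) with (32 * p * a) by (field; lra).
    nra. }
  change (16 ^ S m) with (16 * p). lra.
Qed.

Lemma psum_inv_conv_sq_le n : (1 <= n)%nat ->
  psum (fun i => / (INR (S i) * (INR (n - i) * INR (n - i)))) n <= 4 / INR (S n).
Proof.
  intros Hn. set (m := INR (S n)). assert (Hm : 0 < m) by apply INR_S_pos.
  assert (Hm1 : 1 <= m). { unfold m. apply (le_INR 1). lia. }
  transitivity (psum (fun i => / (m * m) + / (m * m) + / m * / (INR (S (n - 1 - i)) * INR (S (n - 1 - i)))) n).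
  - apply psum_le. intros i Hi.
    assert (Hk : 1 <= INR (S i)) by (apply (le_INR 1); lia).
    assert (Hj : 1 <= INR (n - i)) by (apply (le_INR 1); lia).
    replace (S (n - 1 - i)) with (n - i)%nat by lia.
    assert (Hs : INR (S i) + INR (n - i) = m).
    { unfold m. rewrite <- plus_INR. f_equal. lia. }
    set (k := INR (S i)) in *. set (j := INR (n - i)) in *.
    assert (E : / (k * (j * j)) = / (m * m) * / k + / (m * m) * / j + / m * / (j * j)).
    { rewrite <- Hs. field. lra. }
    rewrite E.
    assert (/ k <= 1) by (rewrite <- Rinv_1; apply Rinv_le_contravar; lra).
    assert (/ j <= 1) by (rewrite <- Rinv_1; apply Rinv_le_contravar; lra).
    assert (0 <= / (m * m)) by (apply Rlt_le, Rinv_0_lt_compat; nra).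
    nra.
  - rewrite psum_plus, psum_plus. rewrite psum_scal.
    rewrite <- (psum_rev (fun i => / (INR (S i) * INR (S i)))).
    rewrite !(psum_ext (fun _ => / (m * m)) (fun _ => / (m * m) * 1)) by (intros; lra).
    rewrite !psum_scal.
    assert (HS := psum_inv_sq_le n Hn).
    assert (H1 : psum (fun _ => 1) n = INR n).
    { clear. induction n; simpl. reflexivity. rewrite IHn. destruct n; simpl; lra. }
    rewrite H1.
    assert (Hnm : INR n <= m) by (unfold m; rewrite S_INR; lra).
    assert (0 < / INR n) by (apply Rinv_0_lt_compat; apply lt_0_INR; lia).
    assert (E1 : / (m * m) * INR n <= / m).
    { unfold Rdiv. apply (Rmult_le_reg_r (m * m)). nra.
      replace (/ (m * m) * INR n * (m * m)) with (INR n) by (field; lra).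
      replace (/ m * (m * m)) with m by (field; lra). lra. }
    assert (E2 : / m * (2 - / INR n) <= / m * 2).
    { apply Rmult_le_compat_l. apply Rlt_le, Rinv_0_lt_compat; lra. lra. }
    assert (E3 : / m * psum (fun i => / (INR (S i) * INR (S i))) n <= / m * (2 - / INR n)).
    { apply Rmult_le_compat_l. apply Rlt_le, Rinv_0_lt_compat; lra. lra. }
    unfold Rdiv. lra.
Qed.

Definition growth_bound (n : nat) : R := 16 ^ n / (16 * (INR n * INR n)).

Lemma bcoef_growth l : (1 <= l)%nat ->
  (forall d, (1 <= d <= l)%nat -> ycoef d <= growth_bound d) ->
  bcoef l <= 2 * 16 ^ l / (16 * INR l).
Proof.
  intros Hl IH. unfold bcoef.
  transitivity (psum (fun d => / 16 * (16 ^ S d / INR (S d))) l).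
  - apply psum_le. intros d Hd.
    assert (HI := IH (S d) ltac:(lia)). unfold growth_bound in HI.
    assert (Hp : 0 < INR (S d)) by apply INR_S_pos.
    assert (INR (S d) * ycoef (S d) <= / 16 * (16 ^ S d / INR (S d))).
    { apply (Rmult_le_reg_r (INR (S d))). lra.
      replace (/ 16 * (16 ^ S d / INR (S d)) * INR (S d)) with
              (16 ^ S d / (16 * (INR (S d) * INR (S d))) * (INR (S d) * INR (S d))) by (field; lra).
      replace (INR (S d) * ycoef (S d) * INR (S d)) with (ycoef (S d) * (INR (S d) * INR (S d))) by ring.
      apply Rmult_le_compat_r. nra. auto. }
    destruct (Nat.eqb _ 0). auto.
    assert (0 <= / 16 * (16 ^ S d / INR (S d))).
    { apply Rmult_le_pos. lra. apply Rlt_le. apply Rdiv_lt_0_compat. apply pow_lt; lra. lra. }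
    lra.
  - rewrite psum_scal. assert (HG := psum_16_pow_div_le l Hl).
    assert (Hl0 : 0 < INR l) by (apply lt_0_INR; lia).
    replace (2 * 16 ^ l / (16 * INR l)) with (/ 16 * (2 * 16 ^ l / INR l)) by (field; lra).
    apply Rmult_le_compat_l; lra.
Qed.

Lemma ycoef_growth n : (1 <= n)%nat -> ycoef n <= growth_bound n.
Proof.
  induction n as [n IH] using (well_founded_induction lt_wf). intros Hn.
  destruct n as [|m]; [lia|]. destruct (Nat.eq_dec m 0) as [->|Hm].
  { rewrite ycoef_1. unfold growth_bound. simpl. lra. }
  assert (Hm1 : 1 <= INR m) by (apply (le_INR 1); lia).
  assert (Hsum : psum (fun i => bcoef (S i) * ycoef (m - i)%nat) m <=
                 16 ^ S m / 128 * psum (fun i => / (INR (S i) * (INR (m - i) * INR (m - i)))) m).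
  { rewrite <- psum_scal. apply psum_le. intros i Hi.
    assert (Hb := bcoef_growth (S i) ltac:(lia) (fun d Hd => IH d ltac:(lia) ltac:(lia))).
    assert (Hy := IH (m - i)%nat ltac:(lia) ltac:(lia)). unfold growth_bound in Hy.
    assert (Hj : 1 <= INR (m - i)) by (apply (le_INR 1); lia).
    assert (Hk : 0 < INR (S i)) by apply INR_S_pos.
    transitivity ((2 * 16 ^ S i / (16 * INR (S i))) * (16 ^ (m - i) / (16 * (INR (m - i) * INR (m - i))))).
    - apply Rmult_le_compat; auto using bcoef_nonneg, ycoef_nonneg.
    - replace (16 ^ S m) with (16 ^ S i * 16 ^ (m - i)) by (rewrite <- pow_add; f_equal; lia).
      right. field. lra. }
  assert (HC := psum_inv_conv_sq_le m ltac:(lia)).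
  assert (H16 : 0 < 16 ^ S m) by (apply pow_lt; lra).
  assert (Hfin : INR m * ycoef (S m) <= 16 ^ S m / 128 * (4 / INR (S m))).
  { rewrite ycoef_recurrence. eapply Rle_trans. apply Hsum. apply Rmult_le_compat_l. lra. auto. }
  unfold growth_bound. rewrite S_INR in Hfin |- *.
  apply (Rmult_le_reg_l (INR m)). lra.
  eapply Rle_trans. apply Hfin.
  unfold Rdiv. apply (Rmult_le_reg_r (128 * (INR m + 1) * (INR m + 1))). nra.
  replace (16 ^ S m * / 128 * (4 * / (INR m + 1)) * (128 * (INR m + 1) * (INR m + 1))) with (4 * 16 ^ S m * (INR m + 1)) by (field; lra).
  replace (INR m * (16 ^ S m * / (16 * ((INR m + 1) * (INR m + 1)))) * (128 * (INR m + 1) * (INR m + 1))) with (8 * INR m * 16 ^ S m) by (field; lra).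
  nra.
Qed.

Lemma CV_radius_ycoef_le_1 : Rbar_le (CV_radius ycoef) 1.
Proof.
  destruct (Rbar_le_lt_dec (CV_radius ycoef) 1) as [H|H]; auto. exfalso.
  assert (H1 : Rbar_lt (Rabs 1) (CV_radius ycoef)) by (rewrite Rabs_R1; auto).
  apply CV_disk_inside in H1. apply ex_series_lim_0 in H1.
  apply is_lim_seq_incr_1 in H1.
  assert (Hle : forall n, 1 <= Rabs (ycoef (S n) * 1 ^ S n)).
  { intros n. rewrite pow1, Rmult_1_r, Rabs_right. apply ycoef_ge1; lia. apply Rle_ge, ycoef_nonneg. }
  assert (Hl := is_lim_seq_le (fun _ => 1) _ 1 0 Hle (is_lim_seq_const 1) H1).
  simpl in Hl. lra.
Qed.

Lemma CV_radius_ycoef_ge : Rbar_le (1/16) (CV_radius ycoef).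
Proof.
  destruct (CV_radius_bounded ycoef) as [Hub _]. apply Hub.
  exists 1. intros n. destruct n as [|n]. rewrite ycoef_0. rewrite Rmult_0_l, Rabs_R0. lra.
  assert (H := ycoef_growth (S n) ltac:(lia)). unfold growth_bound in H.
  rewrite Rabs_right. 2: { apply Rle_ge, Rmult_le_pos. apply ycoef_nonneg. apply pow_le; lra. }
  assert (Hp : 0 < (1/16) ^ S n) by (apply pow_lt; lra).
  assert (Hs : 1 <= INR (S n)) by (apply (le_INR 1); lia).
  apply Rle_trans with (16 ^ S n / (16 * (INR (S n) * INR (S n))) * (1/16) ^ S n).
  apply Rmult_le_compat_r; lra.
  assert (E : 16 ^ S n * (1/16) ^ S n = 1).
  { rewrite <- Rpow_mult_distr. replace (16 * (1/16)) with 1 by field. apply pow1. }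
  replace (16 ^ S n / (16 * (INR (S n) * INR (S n))) * (1/16) ^ S n) with (16 ^ S n * (1/16) ^ S n / (16 * (INR (S n) * INR (S n)))) by (field; nra).
  rewrite E. unfold Rdiv. rewrite Rmult_1_l. rewrite <- Rinv_1. apply Rinv_le_contravar. lra. nra.
Qed.

Lemma CV_radius_ycoef_rho : CV_radius ycoef = Finite rho.
Proof.
  assert (H1 := CV_radius_ycoef_le_1). assert (H2 := CV_radius_ycoef_ge). unfold rho. change (fun n => INR (tree_count n)) with ycoef.
  destruct (CV_radius ycoef); simpl in *; tauto.
Qed.

Lemma rho_bounds : 1/16 <= rho <= 1.
Proof.
  assert (H1 := CV_radius_ycoef_le_1). assert (H2 := CV_radius_ycoef_ge). rewrite CV_radius_ycoef_rho in H1, H2. simpl in *. lra.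
Qed.

Lemma rho_le_1 : rho <= 1.
Proof. apply rho_bounds. Qed.
Lemma rho_pos : 0 < rho.
Proof. assert (H := rho_bounds). lra. Qed.

(** * The majorant Y *)

Definition Y (s : R) : R := Series (fun n => ycoef n * s ^ n).

Lemma ex_Y s : 0 <= s < rho -> ex_series (fun n => ycoef n * s ^ n).
Proof.
  intros Hs. assert (H : Rbar_lt (Rabs s) (CV_radius ycoef)) by (rewrite CV_radius_ycoef_rho, Rabs_right; simpl; lra).
  apply CV_disk_inside in H. eapply ex_series_ext; [|exact H].
  intros n. simpl. apply Rabs_right. apply Rle_ge, Rmult_le_pos. apply ycoef_nonneg. apply pow_le; lra.
Qed.

Lemma Y_nonneg s : 0 <= s < rho -> 0 <= Y s.
Proof. intros Hs. apply Series_nonneg. intros; apply Rmult_le_pos; [apply ycoef_nonneg|apply pow_le; lra]. apply ex_Y; auto. Qed.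

Lemma ex_series_Y_scal s c : 0 <= s < rho -> ex_series (fun n => c * (ycoef n * s ^ n)).
Proof. intros Hs. exact (ex_series_scal_l c _ (ex_Y s Hs)). Qed.

Lemma Y_pow_le s i : 0 <= s < rho -> Y (s ^ S i) <= s ^ i * Y s.
Proof.
  intros Hs. assert (H1 := rho_le_1). unfold Y. rewrite <- Series_scal_l.
  apply Series_le. 2: apply ex_series_Y_scal; auto.
  intros n. split. apply Rmult_le_pos. apply ycoef_nonneg. apply pow_le, pow_le; lra.
  destruct n as [|n]. rewrite ycoef_0. lra.
  replace (s ^ i * (ycoef (S n) * s ^ S n)) with (ycoef (S n) * s ^ (i + S n)) by (rewrite pow_add; ring).
  apply Rmult_le_compat_l. apply ycoef_nonneg. rewrite <- pow_mult.
  apply pow_le_base_le1. lra. nia.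
Qed.

Lemma Y_ratio s t : 0 <= s <= t -> t < rho -> 0 < t -> Y s <= s / t * Y t.
Proof.
  intros Hs Ht Ht0. unfold Y. rewrite <- Series_scal_l.
  apply Series_le. 2: apply ex_series_Y_scal; lra.
  intros n. split. apply Rmult_le_pos. apply ycoef_nonneg. apply pow_le; lra.
  destruct n as [|n]. rewrite ycoef_0. lra.
  rewrite <- Rmult_assoc, (Rmult_comm (s / t)), Rmult_assoc. apply Rmult_le_compat_l. apply ycoef_nonneg.
  replace (s ^ S n) with ((s / t) ^ S n * t ^ S n).
  2: { rewrite <- Rpow_mult_distr. f_equal. field. lra. }
  apply Rmult_le_compat_r. apply pow_le; lra.
  rewrite <- (pow_1 (s / t)) at 2. apply pow_le_base_le1. split. apply Rmult_le_pos; [lra|apply Rlt_le, Rinv_0_lt_compat; lra].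
  apply (Rmult_le_reg_r t); auto. unfold Rdiv. rewrite Rmult_assoc, Rinv_l; lra. lia.
Qed.

Lemma Y_mono s t : 0 <= s <= t -> t < rho -> Y s <= Y t.
Proof.
  intros Hs Ht. destruct (Req_dec t 0). subst. replace s with 0 by lra. lra.
  eapply Rle_trans. apply Y_ratio; eauto. lra.
  rewrite <- (Rmult_1_l (Y t)) at 2. apply Rmult_le_compat_r. apply Y_nonneg; lra.
  apply (Rmult_le_reg_r t). lra. unfold Rdiv. rewrite Rmult_assoc, Rinv_l; lra.
Qed.

Lemma psum_Y_le w N : 0 <= w < rho -> psum (fun e => ycoef (S e) * w ^ S e) N <= Y w.
Proof.
  intros Hw. apply Rle_trans with (psum (fun d => ycoef d * w ^ d) (S N)).
  rewrite psum_shift_l. rewrite ycoef_0. lra.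
  apply partial_le_Series. intros; apply Rmult_le_pos; [apply ycoef_nonneg|apply pow_le; lra]. apply ex_Y; auto.
Qed.

Lemma pow_S_lt_rho m k : 0 <= m < rho -> 0 <= m ^ S k < rho.
Proof.
  intros Hm. assert (Hr := rho_bounds). split. apply pow_le; lra.
  eapply Rle_lt_trans; [|apply Hm]. simpl. assert (m ^ k <= 1) by (apply pow_le1; lra). nra.
Qed.

Lemma Y_mul_le a b : 0 <= a <= 1 -> 0 <= b < rho -> Y (a * b) <= a * Y b.
Proof.
  intros Ha Hb. assert (Hr := rho_bounds). unfold Y. rewrite <- Series_scal_l. apply Series_le.
  2: apply ex_series_Y_scal; auto.
  intros n. split. apply Rmult_le_pos. apply ycoef_nonneg. apply pow_le; nra.
  destruct n as [|n]. rewrite ycoef_0; lra.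
  rewrite Rpow_mult_distr.
  replace (ycoef (S n) * (a ^ S n * b ^ S n)) with ((ycoef (S n) * b ^ S n) * a ^ S n) by ring.
  replace (a * (ycoef (S n) * b ^ S n)) with ((ycoef (S n) * b ^ S n) * a) by ring.
  apply Rmult_le_compat_l. apply Rmult_le_pos. apply ycoef_nonneg. apply pow_le; lra.
  simpl. assert (a ^ n <= 1) by (apply pow_le1; lra). nra.
Qed.

Lemma Y_0 : Y 0 = 0.
Proof.
  unfold Y. transitivity (Series (fun _ => 0)); [|apply Series_zero]. apply Series_ext. intros [|n]. rewrite ycoef_0; ring. rewrite pow_i by lia. ring.
Qed.

(** * The series A(z) = sum_j y(z^j)/j *)

Lemma psum_divisor_swap (H : nat -> nat -> R) N :
  psum (fun n => psum (fun e => if Nat.eqb (n mod S e) 0 then H (S e) (n / S e)%nat else 0) n) (S N)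
  = psum (fun e => psum (fun j => if Nat.leb (S e * S j) N then H (S e) (S j) else 0) N) N.
Proof.
  induction N.
  - simpl. lra.
  - change (psum (fun n => psum (fun e => if Nat.eqb (n mod S e) 0 then H (S e) (n / S e)%nat else 0) n) (S (S N)))
      with (psum (fun n => psum (fun e => if Nat.eqb (n mod S e) 0 then H (S e) (n / S e)%nat else 0) n) (S N)
            + psum (fun e => if Nat.eqb (S N mod S e) 0 then H (S e) (S N / S e)%nat else 0) (S N)).
    rewrite IHN.
    assert (A : psum (fun e => psum (fun j => if Nat.leb (S e * S j) N then H (S e) (S j) else 0) N) N =
                psum (fun e => psum (fun j => if Nat.leb (S e * S j) N then H (S e) (S j) else 0) (S N)) (S N)).
    { assert (A1 : forall e, psum (fun j => if Nat.leb (S e * S j) N then H (S e) (S j) else 0) (S N) =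
                             psum (fun j => if Nat.leb (S e * S j) N then H (S e) (S j) else 0) N).
      { intros e. cbn [psum]. destruct (Nat.leb_spec (S e * S N) N); [nia|]. lra. }
      rewrite (psum_ext _ _ (S N) (fun e _ => A1 e)). cbn [psum].
      rewrite (psum_ext (fun j => if Nat.leb (S N * S j) N then H (S N) (S j) else 0) (fun _ => 0)).
      rewrite psum_zero. lra.
      intros j _. destruct (Nat.leb_spec (S N * S j) N); [nia|]. auto. }
    rewrite A. rewrite <- psum_plus. apply psum_ext. intros e He. symmetry.
    transitivity (psum (fun j => (if Nat.leb (S e * S j) N then H (S e) (S j) else 0) + (if Nat.eqb (S e * S j) (S N) then H (S e) (S j) else 0)) (S N)).
    + apply psum_ext. intros j Hj. destruct (Nat.leb_spec (S e * S j) (S N)); destruct (Nat.leb_spec (S e * S j) N); destruct (Nat.eqb_spec (S e * S j) (S N)); try lia; lra.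
    + rewrite psum_plus. f_equal.
      destruct (Nat.eqb_spec (S N mod S e) 0) as [Hd|Hd].
      * apply Nat.Div0.div_exact in Hd. set (q := (S N / S e)%nat) in *.
        assert (Hq : (1 <= q <= S N)%nat) by nia.
        rewrite (psum_ext _ (fun j => if Nat.eqb j (q - 1) then H (S e) (S j) else 0)).
        rewrite psum_single. destruct (Nat.ltb_spec (q - 1) (S N)); [|lia]. f_equal. lia.
        intros j Hj. destruct (Nat.eqb_spec (S e * S j) (S N)); destruct (Nat.eqb_spec j (q - 1)); try nia; auto.
      * rewrite (psum_ext _ (fun _ => 0)). apply psum_zero.
        intros j Hj. destruct (Nat.eqb_spec (S e * S j) (S N)); auto. exfalso. apply Hd.
        rewrite <- e0. rewrite Nat.mul_comm. apply Nat.Div0.mod_mul.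
Qed.

(* The coefficients of A(x) = sum_j y(x^j)/j: x A'(x) = sum_n b_n x^n. *)
Definition acoef (n : nat) : R := if Nat.eqb n 0 then 0 else bcoef n / INR n.

Lemma acoef_nonneg n : 0 <= acoef n.
Proof. unfold acoef. destruct (Nat.eqb_spec n 0). lra. apply Rmult_le_pos. apply bcoef_nonneg. apply Rlt_le, Rinv_0_lt_compat, lt_0_INR; lia. Qed.

Lemma acoef_expand (phi : nat -> R) n : acoef n * phi n =
  psum (fun e => if Nat.eqb (n mod S e) 0 then ycoef (S e) * phi (S (n / S e - 1) * S e)%nat / INR (S (n / S e - 1)) else 0) n.
Proof.
  unfold acoef. destruct (Nat.eqb_spec n 0). subst. simpl. lra.
  unfold bcoef. unfold Rdiv. rewrite Rmult_assoc, Rmult_comm. rewrite <- psum_scal. apply psum_ext.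
  intros e He. destruct (Nat.eqb_spec (n mod S e) 0) as [Hd|Hd]; [|lra].
  apply Nat.Div0.div_exact in Hd. set (q := (n / S e)%nat) in *.
  assert (Hq : (1 <= q)%nat) by nia. replace (S (q - 1)) with q by lia.
  rewrite (Nat.mul_comm q (S e)), <- Hd. replace (INR n) with (INR (S e) * INR q) by (rewrite <- mult_INR; f_equal; auto).
  field. split; apply Rgt_not_eq; apply lt_0_INR; lia.
Qed.

Lemma acoef_partial (phi : nat -> R) N :
  psum (fun n => acoef n * phi n) (S N) =
  psum (fun j => psum (fun e => if Nat.leb (S e * S j) N then ycoef (S e) * phi (S j * S e)%nat / INR (S j) else 0) N) N.
Proof.
  rewrite (psum_ext _ _ _ (fun n _ => acoef_expand phi n)).
  rewrite (psum_divisor_swap (fun d i => ycoef d * phi (S (i - 1) * d)%nat / INR (S (i - 1)))).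
  rewrite psum_switch. apply psum_ext. intros j _. apply psum_ext. intros e _.
  destruct (Nat.leb _ _); auto. replace (S j - 1)%nat with j by lia. reflexivity.
Qed.

Lemma acoef_series_bound s : 0 <= s < rho -> ex_series (fun n => acoef n * s ^ n) /\ Series (fun n => acoef n * s ^ n) <= Y s / (1 - s).
Proof.
  intros Hs. assert (Hr := rho_bounds). assert (Hs1 : s < 1) by lra.
  assert (HY := Y_nonneg s Hs).
  apply ex_series_bounded. intros; apply Rmult_le_pos; [apply acoef_nonneg|apply pow_le; lra].
  intros [|N]. simpl. apply Rmult_le_pos; auto. apply Rlt_le, Rinv_0_lt_compat; lra.
  rewrite acoef_partial.
  apply Rle_trans with (psum (fun j => s ^ j * Y s) N).
  - apply psum_le. intros j Hj. eapply Rle_trans. 2: apply (Y_pow_le s j Hs).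
    assert (Hw : 0 <= s ^ S j < rho).
    { split. apply pow_le; lra. eapply Rle_lt_trans; [|apply Hs]. simpl. assert (s ^ j <= 1) by (apply pow_le1; lra). nra. }
    eapply Rle_trans. 2: apply (psum_Y_le (s ^ S j) N Hw).
    apply psum_le. intros e He. destruct (Nat.leb _ _).
    + rewrite <- pow_mult. unfold Rdiv. rewrite <- (Rmult_1_r (ycoef (S e) * s ^ (S j * S e))) at 2.
      apply Rmult_le_compat_l. apply Rmult_le_pos; [apply ycoef_nonneg|apply pow_le; lra]. apply inv_INR_S_le1.
    + apply Rmult_le_pos; [apply ycoef_nonneg|apply pow_le, pow_le; lra].
  - rewrite (psum_ext _ (fun j => Y s * s ^ j)) by (intros; ring). rewrite psum_scal.
    unfold Rdiv. apply Rmult_le_compat_l; auto. apply psum_geom_le. lra.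
Qed.

Lemma psum_multiples_le j N (F : nat -> R) : F O = 0 ->
  psum (fun e => if Nat.leb (S e * S j) N then F (S e) else 0) N = psum F (S (N / S j)).
Proof.
  intros HF0. set (D := (N / S j)%nat).
  assert (HD : (D <= N)%nat) by (apply Nat.Div0.div_le_upper_bound; nia).
  transitivity (psum (fun e => if Nat.leb (S e * S j) N then F (S e) else 0) (D + (N - D))).
  { f_equal. lia. }
  rewrite psum_split.
  rewrite (psum_ext (fun l => if Nat.leb (S (D + l) * S j) N then F (S (D + l)) else 0) (fun _ => 0)).
  rewrite psum_zero, Rplus_0_r. rewrite psum_shift_l, HF0, Rplus_0_l. apply psum_ext.
  - intros e He. destruct (Nat.leb_spec (S e * S j) N); auto. exfalso.
    assert (H1 := Nat.div_mod_eq N (S j)). assert (H2 := Nat.mod_upper_bound N (S j) ltac:(lia)).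
    fold D in H1. nia.
  - intros l _. destruct (Nat.leb_spec (S (D + l) * S j) N); auto. exfalso.
    assert (H1 := Nat.mul_succ_div_gt N (S j) ltac:(lia)). fold D in H1. nia.
Qed.

(* With phi n = Re (z^n) or Im (z^n), the identity
   sum_n a_n phi(n) = sum_j (1/(j+1)) sum_d y_d phi((j+1) d) is A(z) = sum_j y(z^j)/j.
   The partial sums are compared with psum_divisor_swap; the error is a tail that
   |phi n| <= m^n with m < rho bounds geometrically. *)
Section Rearrangement.
Variable phi : nat -> R.
Variable m : R.
Hypothesis Hm : 0 <= m < rho.
Hypothesis Hphi : forall n, Rabs (phi n) <= m ^ n.

Let s := (m + rho) / 2.
Let q := m / s.

Lemma swap_radii : 0 < s /\ m < s /\ s < rho /\ s < 1 /\ 0 <= q < 1 /\ m = q * s.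
Proof.
  assert (Hr := rho_bounds). unfold q, s. repeat split; try lra.
  apply Rmult_le_pos; [lra|]. apply Rlt_le, Rinv_0_lt_compat; lra.
  apply (Rmult_lt_reg_r ((m + rho) / 2)). lra. unfold Rdiv. rewrite Rmult_assoc, Rinv_l; lra.
  field. lra.
Qed.

Definition ypow_series (j : nat) : R := Series (fun d => ycoef d * phi (S j * d)%nat).

Lemma ypow_term_bound j d : Rabs (ycoef d * phi (S j * d)%nat) <= ycoef d * (m ^ S j) ^ d.
Proof.
  rewrite Rabs_mult, Rabs_right by (apply Rle_ge, ycoef_nonneg). apply Rmult_le_compat_l. apply ycoef_nonneg.
  rewrite <- pow_mult. apply Hphi.
Qed.

Lemma ex_series_ypow_abs j : ex_series (fun d => Rabs (ycoef d * phi (S j * d)%nat)).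
Proof.
  apply (ex_series_le (fun d => Rabs (ycoef d * phi (S j * d)%nat)) (fun d => ycoef d * (m ^ S j) ^ d)).
  intros d. change (norm (Rabs (ycoef d * phi (S j * d)%nat))) with (Rabs (Rabs (ycoef d * phi (S j * d)%nat))).
  rewrite Rabs_Rabsolu. apply ypow_term_bound. apply ex_Y. apply pow_S_lt_rho; auto.
Qed.

Lemma ypow_series_bound j : Rabs (ypow_series j) <= m ^ j * Y m.
Proof.
  unfold ypow_series. eapply Rle_trans. apply Series_Rabs. apply ex_series_ypow_abs.
  eapply Rle_trans. 2: apply (Y_pow_le m j Hm).
  apply Series_le. intros d; split. apply Rabs_pos. apply ypow_term_bound. apply ex_Y, pow_S_lt_rho; auto.
Qed.

Lemma ex_series_ypow_log : ex_series (fun j => ypow_series j / INR (S j)).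
Proof.
  apply (ex_series_le (fun j => ypow_series j / INR (S j)) (fun j => Y m * m ^ j)).
  intros j. change (norm (ypow_series j / INR (S j))) with (Rabs (ypow_series j / INR (S j))).
  unfold Rdiv. rewrite Rabs_mult. rewrite (Rabs_right (/ _)) by (apply Rle_ge, Rlt_le, inv_INR_S_pos).
  rewrite (Rmult_comm (Y m)). apply Rle_trans with (Rabs (ypow_series j) * 1).
  apply Rmult_le_compat_l. apply Rabs_pos. apply inv_INR_S_le1. rewrite Rmult_1_r. apply ypow_series_bound.
  assert (Hg : ex_series (fun j => m ^ j)) by (apply ex_series_geom; assert (Hr := rho_bounds); rewrite Rabs_right; lra).
  exact (ex_series_scal_l (Y m) _ Hg).
Qed.

Lemma ypow_series_tail j N :
  Rabs (psum (fun d => ycoef d * phi (S j * d)%nat) (S (N / S j)) - ypow_series j) <= q ^ N * s ^ j * Y s.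
Proof.
  destruct swap_radii as (Hs0 & Hms & Hsr & Hs1 & Hq & Hmq).
  set (D := (N / S j)%nat). set (F := fun d => ycoef d * phi (S j * d)%nat).
  assert (HFex : ex_series F).
  { apply ex_series_Rabs. apply ex_series_ypow_abs. }
  unfold ypow_series. fold F. rewrite (Series_incr_n F (S D)) by (lia || auto). simpl pred. rewrite sum_f_psum.
  replace (psum F (S D) - (psum F (S D) + Series (fun k => F (S D + k)%nat))) with (- Series (fun k => F (S D + k)%nat)) by ring.
  rewrite Rabs_Ropp.
  assert (Hex2 : ex_series (fun k => Rabs (F (S D + k)%nat))).
  { apply (ex_series_incr_n (fun k => Rabs (F k)) (S D)). apply ex_series_ypow_abs. }
  eapply Rle_trans. apply Series_Rabs. auto.
  assert (HYs := ex_Y s ltac:(lra)).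
  assert (Hex3 : ex_series (fun k => ycoef (S D + k) * s ^ (S D + k))).
  { apply (ex_series_incr_n (fun k => ycoef k * s ^ k) (S D)). auto. }
  apply Rle_trans with (Series (fun k => q ^ N * s ^ j * (ycoef (S D + k) * s ^ (S D + k)))).
  - apply Series_le. 2: { exact (ex_series_scal_l (q ^ N * s ^ j) _ Hex3). }
    intros k. split. apply Rabs_pos. unfold F.
    eapply Rle_trans. apply ypow_term_bound. rewrite <- pow_mult.
    set (d := (S D + k)%nat). set (E := (S j * d)%nat).
    assert (HE1 : (N <= E)%nat).
    { assert (H1 := Nat.mul_succ_div_gt N (S j) ltac:(lia)). fold D in H1. unfold E, d. nia. }
    assert (HE2 : (j + d <= E)%nat) by (unfold E, d; nia).
    rewrite Rmult_comm. rewrite (Rmult_comm (ycoef d)), <- Rmult_assoc. apply Rmult_le_compat_r. apply ycoef_nonneg.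
    rewrite Hmq, Rpow_mult_distr.
    apply Rle_trans with (q ^ N * s ^ E). apply Rmult_le_compat_r. apply pow_le; lra. apply pow_le_base_le1; lra || lia.
    rewrite Rmult_assoc. apply Rmult_le_compat_l. apply pow_le; lra. rewrite <- pow_add. apply pow_le_base_le1; lra || lia.
  - rewrite Series_scal_l. apply Rmult_le_compat_l. apply Rmult_le_pos; apply pow_le; lra.
    unfold Y. rewrite (Series_incr_n (fun n => ycoef n * s ^ n) (S D)) by (lia || auto).
    assert (0 <= sum_f_R0 (fun n => ycoef n * s ^ n) (pred (S D))).
    { rewrite sum_f_psum. apply psum_nonneg. intros; apply Rmult_le_pos; [apply ycoef_nonneg|apply pow_le; lra]. }
    lra.
Qed.

Theorem is_series_acoef_swap : is_series (fun n => acoef n * phi n) (Series (fun j => ypow_series j / INR (S j))).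
Proof.
  destruct swap_radii as (Hs0 & Hms & Hsr & Hs1 & Hq & Hmq).
  set (L := Series (fun j => ypow_series j / INR (S j))).
  set (eps := fun N => q ^ N * (Y s / (1 - s))).
  set (B := fun N => psum (fun j => ypow_series j / INR (S j)) N).
  assert (HYs := Y_nonneg s ltac:(lra)).
  assert (HB : is_lim_seq B L).
  { apply is_lim_seq_incr_1. apply (is_lim_seq_ext (sum_n (fun j => ypow_series j / INR (S j)))).
    intros n. unfold B. apply sum_n_psum. apply Series_correct. apply ex_series_ypow_log. }
  assert (Heps : is_lim_seq eps 0).
  { unfold eps. replace (Finite 0) with (Rbar_mult 0 (Y s / (1 - s))) by (simpl; f_equal; ring).
    apply is_lim_seq_scal_r. apply is_lim_seq_geom. rewrite Rabs_right; lra. }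
  assert (Hclose : forall N, Rabs (psum (fun n => acoef n * phi n) (S N) - B N) <= eps N).
  { intros N. rewrite acoef_partial. unfold B. unfold Rminus at 1. rewrite <- psum_opp, <- psum_plus.
    rewrite (psum_ext _ (fun j => (psum (fun d => ycoef d * phi (S j * d)%nat) (S (N / S j)) - ypow_series j) * / INR (S j))).
    2: { intros j Hj.
         rewrite (psum_multiples_le j N (fun d => ycoef d * phi (S j * d)%nat / INR (S j))) by (rewrite ycoef_0; unfold Rdiv; ring).
         rewrite (psum_ext (fun d => ycoef d * phi (S j * d)%nat / INR (S j)) (fun d => / INR (S j) * (ycoef d * phi (S j * d)%nat))) by (intros; unfold Rdiv; ring).
         rewrite psum_scal. unfold Rdiv. ring. }
    eapply Rle_trans. apply psum_abs.
    apply Rle_trans with (psum (fun j => q ^ N * Y s * s ^ j) N).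
    - apply psum_le. intros j Hj. rewrite Rabs_mult. rewrite (Rabs_right (/ _)) by (apply Rle_ge, Rlt_le, inv_INR_S_pos).
      apply Rle_trans with (Rabs (psum (fun d => ycoef d * phi (S j * d)%nat) (S (N / S j)) - ypow_series j) * 1).
      apply Rmult_le_compat_l. apply Rabs_pos. apply inv_INR_S_le1. rewrite Rmult_1_r.
      eapply Rle_trans. apply ypow_series_tail. right; ring.
    - rewrite psum_scal. unfold eps. unfold Rdiv. rewrite <- Rmult_assoc. apply Rmult_le_compat_l.
      apply Rmult_le_pos; auto. apply pow_le; lra. apply psum_geom_le. lra. }
  assert (Hlim : is_lim_seq (fun N => psum (fun n => acoef n * phi n) (S N)) L).
  { apply (is_lim_seq_le_le (fun N => B N - eps N) _ (fun N => B N + eps N)).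
    - intros N. specialize (Hclose N). apply Rabs_le_between' in Hclose. lra.
    - replace (Finite L) with (Rbar_minus L 0) by (simpl; f_equal; ring). apply is_lim_seq_minus'; auto.
    - replace (Finite L) with (Rbar_plus L 0) by (simpl; f_equal; ring). apply is_lim_seq_plus'; auto. }
  apply (is_lim_seq_ext _ _ _ (fun N => eq_sym (sum_n_psum _ N))) in Hlim. exact Hlim.
Qed.
End Rearrangement.

(** * The functional equation *)

(* Along t |-> t z put g(t) = y(tz)/(tz) = sum_n y_(n+1) (tz)^n and A(t) = sum_n a_n (tz)^n,
   split into real and imaginary parts.  The recurrence says g' = A' g, so
   h = g exp(-A) is constant on [0, 1]; h(0) = 1 gives y(z) = z exp(A(1)). *)
Section ODE.
Variable z : C.
Hypothesis Hz : Cmod z < rho.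

Definition g_re n := ycoef (S n) * Re (Cpow z n).
Definition g_im n := ycoef (S n) * Im (Cpow z n).
Definition A_re n := acoef n * Re (Cpow z n).
Definition A_im n := acoef n * Im (Cpow z n).

Let m := Cmod z.
Let s := (m + rho) / 2.

Lemma radius_facts : 0 <= m < s /\ 0 < s /\ s < rho.
Proof. assert (Hr := rho_bounds). assert (H0 := Cmod_ge_0 z). unfold s, m in *. repeat split; lra. Qed.

Lemma ex_series_ycoef_S : ex_series (fun n => ycoef (S n) * s ^ n).
Proof.
  destruct radius_facts as (H1 & H2 & H3).
  assert (H : ex_series (fun n => ycoef (S n) * s ^ S n)).
  { apply (ex_series_incr_1 (fun n => ycoef n * s ^ n)). apply ex_Y. lra. }
  apply (ex_series_ext (fun n => / s * (ycoef (S n) * s ^ S n))). intros n. simpl. field. lra.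
  exact (ex_series_scal_l (/ s) _ H).
Qed.

Lemma CV_radius_g a : (forall n, Rabs (a n) <= ycoef (S n) * m ^ n) -> forall t, Rabs t <= 1 -> Rbar_lt (Rabs t) (CV_radius a).
Proof.
  intros Ha. destruct radius_facts as (H1 & H2 & H3). apply (CV_radius_gt_unit_disk a (fun n => ycoef (S n)) m s); auto.
  intros; apply ycoef_nonneg. apply ex_series_ycoef_S.
Qed.

Lemma CV_radius_A a : (forall n, Rabs (a n) <= acoef n * m ^ n) -> forall t, Rabs t <= 1 -> Rbar_lt (Rabs t) (CV_radius a).
Proof.
  intros Ha. destruct radius_facts as (H1 & H2 & H3). apply (CV_radius_gt_unit_disk a acoef m s); auto.
  apply acoef_nonneg. apply acoef_series_bound. lra.
Qed.

Lemma CV_radius_g_re t : Rabs t <= 1 -> Rbar_lt (Rabs t) (CV_radius g_re).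
Proof. apply CV_radius_g. intros n. unfold g_re. rewrite Rabs_mult, Rabs_right by (apply Rle_ge, ycoef_nonneg). apply Rmult_le_compat_l. apply ycoef_nonneg. apply Rabs_Re_Cpow_le. Qed.
Lemma CV_radius_g_im t : Rabs t <= 1 -> Rbar_lt (Rabs t) (CV_radius g_im).
Proof. apply CV_radius_g. intros n. unfold g_im. rewrite Rabs_mult, Rabs_right by (apply Rle_ge, ycoef_nonneg). apply Rmult_le_compat_l. apply ycoef_nonneg. apply Rabs_Im_Cpow_le. Qed.
Lemma CV_radius_A_re t : Rabs t <= 1 -> Rbar_lt (Rabs t) (CV_radius A_re).
Proof. apply CV_radius_A. intros n. unfold A_re. rewrite Rabs_mult, Rabs_right by (apply Rle_ge, acoef_nonneg). apply Rmult_le_compat_l. apply acoef_nonneg. apply Rabs_Re_Cpow_le. Qed.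
Lemma CV_radius_A_im t : Rabs t <= 1 -> Rbar_lt (Rabs t) (CV_radius A_im).
Proof. apply CV_radius_A. intros n. unfold A_im. rewrite Rabs_mult, Rabs_right by (apply Rle_ge, acoef_nonneg). apply Rmult_le_compat_l. apply acoef_nonneg. apply Rabs_Im_Cpow_le. Qed.

Lemma PS_derive_acoef (phi : nat -> R) k : PS_derive (fun n => acoef n * phi n) k = bcoef (S k) * phi (S k).
Proof. unfold PS_derive, acoef. simpl Nat.eqb. cbv iota. field. apply Rgt_not_eq, INR_S_pos. Qed.

Lemma Cpow_split k n : (k <= n)%nat -> Cpow z (S n) = Cmult (Cpow z (S k)) (Cpow z (n - k)).
Proof. intros H. rewrite <- Cpow_add_r. f_equal. lia. Qed.

Lemma PS_derive_g_re n : PS_derive g_re n = PS_mult (PS_derive A_re) g_re n - PS_mult (PS_derive A_im) g_im n.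
Proof.
  rewrite !PS_mult_psum. unfold Rminus. rewrite <- psum_opp, <- psum_plus.
  unfold PS_derive at 1, g_re at 1. rewrite <- Rmult_assoc, ycoef_recurrence_S, Rmult_comm, <- psum_scal.
  apply psum_ext. intros k Hk. unfold A_re, A_im. rewrite !PS_derive_acoef. unfold g_re, g_im.
  rewrite (Cpow_split k n) by lia. unfold Cmult, Re, Im. simpl. ring.
Qed.

Lemma PS_derive_g_im n : PS_derive g_im n = PS_mult (PS_derive A_re) g_im n + PS_mult (PS_derive A_im) g_re n.
Proof.
  rewrite !PS_mult_psum. rewrite <- psum_plus.
  unfold PS_derive at 1, g_im at 1. rewrite <- Rmult_assoc, ycoef_recurrence_S, Rmult_comm, <- psum_scal.
  apply psum_ext. intros k Hk. unfold A_re, A_im. rewrite !PS_derive_acoef. unfold g_re, g_im.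
  rewrite (Cpow_split k n) by lia. unfold Cmult, Re, Im. simpl. ring.
Qed.

Lemma PSeries_derive_g_re t : Rabs t <= 1 -> PSeries (PS_derive g_re) t = PSeries (PS_derive A_re) t * PSeries g_re t - PSeries (PS_derive A_im) t * PSeries g_im t.
Proof.
  intros Ht. rewrite (PSeries_ext _ (PS_minus (PS_mult (PS_derive A_re) g_re) (PS_mult (PS_derive A_im) g_im))) by apply PS_derive_g_re.
  rewrite PSeries_minus. rewrite !PSeries_mult_derive; auto using CV_radius_g_re, CV_radius_g_im, CV_radius_A_re, CV_radius_A_im.
  apply ex_pseries_mult_derive; auto using CV_radius_g_re, CV_radius_A_re. apply ex_pseries_mult_derive; auto using CV_radius_g_im, CV_radius_A_im.
Qed.

Lemma PSeries_derive_g_im t : Rabs t <= 1 -> PSeries (PS_derive g_im) t = PSeries (PS_derive A_re) t * PSeries g_im t + PSeries (PS_derive A_im) t * PSeries g_re t.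
Proof.
  intros Ht. rewrite (PSeries_ext _ (PS_plus (PS_mult (PS_derive A_re) g_im) (PS_mult (PS_derive A_im) g_re))) by apply PS_derive_g_im.
  rewrite PSeries_plus. rewrite !PSeries_mult_derive; auto using CV_radius_g_re, CV_radius_g_im, CV_radius_A_re, CV_radius_A_im.
  apply ex_pseries_mult_derive; auto using CV_radius_g_im, CV_radius_A_re. apply ex_pseries_mult_derive; auto using CV_radius_g_re, CV_radius_A_im.
Qed.

Definition h_re t := PSeries g_re t * exp (- PSeries A_re t) * cos (PSeries A_im t) + PSeries g_im t * exp (- PSeries A_re t) * sin (PSeries A_im t).
Definition h_im t := - PSeries g_re t * exp (- PSeries A_re t) * sin (PSeries A_im t) + PSeries g_im t * exp (- PSeries A_re t) * cos (PSeries A_im t).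

Lemma h_re_derive t : Rabs t <= 1 -> is_derive h_re t 0.
Proof.
  intros Ht. unfold h_re. auto_derive.
  - repeat split; apply ex_derive_PSeries; auto using CV_radius_g_re, CV_radius_g_im, CV_radius_A_re, CV_radius_A_im.
  - rewrite !Derive_PSeries by auto using CV_radius_g_re, CV_radius_g_im, CV_radius_A_re, CV_radius_A_im.
    rewrite PSeries_derive_g_re, PSeries_derive_g_im by auto. ring.
Qed.

Lemma h_im_derive t : Rabs t <= 1 -> is_derive h_im t 0.
Proof.
  intros Ht. unfold h_im. auto_derive.
  - repeat split; apply ex_derive_PSeries; auto using CV_radius_g_re, CV_radius_g_im, CV_radius_A_re, CV_radius_A_im.
  - rewrite !Derive_PSeries by auto using CV_radius_g_re, CV_radius_g_im, CV_radius_A_re, CV_radius_A_im.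
    rewrite PSeries_derive_g_re, PSeries_derive_g_im by auto. ring.
Qed.

Lemma h_re_1 : h_re 1 = 1.
Proof.
  rewrite (derive_0_const_01 h_re h_re_derive). unfold h_re. rewrite !PSeries_0. unfold g_re, g_im, A_re, A_im, acoef. simpl Nat.eqb. cbv iota.
  simpl Cpow. rewrite ycoef_1. unfold RtoC, Re, Im. simpl. rewrite !Rmult_0_l, Ropp_0, exp_0, cos_0, sin_0. ring.
Qed.

Lemma h_im_1 : h_im 1 = 0.
Proof.
  rewrite (derive_0_const_01 h_im h_im_derive). unfold h_im. rewrite !PSeries_0. unfold g_re, g_im, A_re, A_im, acoef. simpl Nat.eqb. cbv iota.
  simpl Cpow. rewrite ycoef_1. unfold RtoC, Re, Im. simpl. rewrite !Rmult_0_l, Ropp_0, exp_0, cos_0, sin_0. ring.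
Qed.

Lemma g_eq_exp_A : (Series g_re, Series g_im) = Cexp (Series A_re, Series A_im).
Proof.
  assert (H1 := h_re_1). assert (H2 := h_im_1). unfold h_re, h_im in *. rewrite !PSeries_at_1 in H1, H2.
  set (a := Series g_re) in *. set (b := Series g_im) in *. set (c := Series A_re) in *. set (d := Series A_im) in *.
  unfold Cexp. simpl. 
  assert (He := exp_pos c). assert (Hsc := sin2_cos2 d). unfold Rsqr in Hsc.
  assert (Ec : exp (- c) * exp c = 1) by (rewrite <- exp_plus; replace (- c + c) with 0 by ring; apply exp_0).
  assert (Ea : a * exp (- c) = cos d * (a * exp (- c) * cos d + b * exp (- c) * sin d) - sin d * (- a * exp (- c) * sin d + b * exp (- c) * cos d)).
  { transitivity (a * exp (- c) * (sin d * sin d + cos d * cos d)). rewrite Hsc; ring. ring. }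
  assert (Eb : b * exp (- c) = sin d * (a * exp (- c) * cos d + b * exp (- c) * sin d) + cos d * (- a * exp (- c) * sin d + b * exp (- c) * cos d)).
  { transitivity (b * exp (- c) * (sin d * sin d + cos d * cos d)). rewrite Hsc; ring. ring. }
  rewrite H1, H2 in Ea, Eb.
  f_equal.
  - apply (Rmult_eq_reg_l (exp (- c))). 2: apply Rgt_not_eq, exp_pos.
    replace (exp (- c) * (exp c * cos d)) with (cos d) by (rewrite <- Rmult_assoc, Ec; ring). lra.
  - apply (Rmult_eq_reg_l (exp (- c))). 2: apply Rgt_not_eq, exp_pos.
    replace (exp (- c) * (exp c * sin d)) with (sin d) by (rewrite <- Rmult_assoc, Ec; ring). lra.
Qed.
End ODE.

Lemma Re_ytree w : Re (ytree w) = Series (fun d => ycoef d * Re (Cpow w d)).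
Proof. unfold ytree, csum. simpl. apply Series_ext. intros. apply Re_RtoC_mult. Qed.
Lemma Im_ytree w : Im (ytree w) = Series (fun d => ycoef d * Im (Cpow w d)).
Proof. unfold ytree, csum. simpl. apply Series_ext. intros. apply Im_RtoC_mult. Qed.

Section FE.
Variable z : C.
Hypothesis Hz : Cmod z < rho.

Lemma ex_series_g_re : ex_series (g_re z).
Proof. apply ex_series_of_CV_radius. rewrite <- Rabs_R1. apply CV_radius_g_re; auto. rewrite Rabs_R1; lra. Qed.

Lemma ex_series_g_im : ex_series (g_im z).
Proof. apply ex_series_of_CV_radius. rewrite <- Rabs_R1. apply CV_radius_g_im; auto. rewrite Rabs_R1; lra. Qed.

Lemma ytree_shift : ytree z = Cmult z (Series (g_re z), Series (g_im z)).
Proof.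
  assert (ER : forall n, ycoef (S n) * Re (Cpow z (S n)) = Re z * g_re z n - Im z * g_im z n)
    by (intros n; unfold g_re, g_im; simpl Cpow; unfold Cmult, Re, Im; simpl; ring).
  assert (EI : forall n, ycoef (S n) * Im (Cpow z (S n)) = Re z * g_im z n + Im z * g_re z n)
    by (intros n; unfold g_re, g_im; simpl Cpow; unfold Cmult, Re, Im; simpl; ring).
  assert (Hre := ex_series_scal_l (Re z) _ ex_series_g_re).
  assert (Him := ex_series_scal_l (Re z) _ ex_series_g_im).
  assert (Hre' := ex_series_scal_l (Im z) _ ex_series_g_re).
  assert (Him' := ex_series_scal_l (Im z) _ ex_series_g_im).
  apply injective_projections.
  - change (fst (ytree z)) with (Re (ytree z)). rewrite Re_ytree, Series_incr_1.
    + rewrite ycoef_0, Rmult_0_l, Rplus_0_l, (Series_ext _ _ ER), Series_minus, !Series_scal_l by auto.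
      unfold Cmult, Re, Im. simpl. ring.
    + apply ex_series_incr_1. eapply ex_series_ext. intros n. symmetry. apply ER.
      apply (ex_series_minus (fun n => Re z * g_re z n) (fun n => Im z * g_im z n)); auto.
  - change (snd (ytree z)) with (Im (ytree z)). rewrite Im_ytree, Series_incr_1.
    + rewrite ycoef_0, Rmult_0_l, Rplus_0_l, (Series_ext _ _ EI), Series_plus, !Series_scal_l by auto.
      unfold Cmult, Re, Im. simpl. ring.
    + apply ex_series_incr_1. eapply ex_series_ext. intros n. symmetry. apply EI.
      apply (ex_series_plus (fun n => Re z * g_im z n) (fun n => Im z * g_re z n)); auto.
Qed.

Lemma csum_log_ytree : csum (fun j => Cdiv (ytree (Cpow z (S j))) (RtoC (INR (S j)))) = (Series (A_re z), Series (A_im z)).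
Proof.
  assert (Hm : 0 <= Cmod z < rho) by (split; auto; apply Cmod_ge_0).
  unfold csum. f_equal.
  - transitivity (Series (fun j => ypow_series (fun n => Re (Cpow z n)) j / INR (S j))).
    + apply Series_ext. intros j. rewrite Re_div_R by (apply Rgt_not_eq, INR_S_pos). rewrite Re_ytree.
      unfold ypow_series. f_equal. apply Series_ext. intros d. rewrite Cpow_mult_r. reflexivity.
    + symmetry. apply is_series_unique. exact (is_series_acoef_swap (fun n => Re (Cpow z n)) (Cmod z) Hm (Rabs_Re_Cpow_le z)).
  - transitivity (Series (fun j => ypow_series (fun n => Im (Cpow z n)) j / INR (S j))).
    + apply Series_ext. intros j. rewrite Im_div_R by (apply Rgt_not_eq, INR_S_pos). rewrite Im_ytree.
      unfold ypow_series. f_equal. apply Series_ext. intros d. rewrite Cpow_mult_r. reflexivity.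
    + symmetry. apply is_series_unique. exact (is_series_acoef_swap (fun n => Im (Cpow z n)) (Cmod z) Hm (Rabs_Im_Cpow_le z)).
Qed.

Theorem ytree_functional_eq : ytree z = Cmult z (Cexp (csum (fun j => Cdiv (ytree (Cpow z (S j))) (RtoC (INR (S j)))))).
Proof. rewrite csum_log_ytree, ytree_shift, (g_eq_exp_A z Hz). reflexivity. Qed.
End FE.

(** * Consequences on the real axis *)

Lemma ytree_real w : 0 <= w < rho -> ytree (RtoC w) = RtoC (Y w).
Proof.
  intros Hw. apply injective_projections.
  - change (fst (ytree w)) with (Re (ytree w)). rewrite Re_ytree. unfold Y. simpl. apply Series_ext.
    intros d. rewrite <- RtoC_pow. reflexivity.
  - change (snd (ytree w)) with (Im (ytree w)). rewrite Im_ytree. simpl.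
    rewrite <- Series_zero. apply Series_ext. intros d. rewrite <- RtoC_pow. simpl. ring.
Qed.

Definition Ylog (t : R) := Series (fun j => Y (t ^ S j) / INR (S j)).

Lemma Ylog_term_nonneg t j : 0 <= t < rho -> 0 <= Y (t ^ S j) / INR (S j).
Proof.
  intros Ht. apply Rmult_le_pos. apply Y_nonneg. apply pow_S_lt_rho; auto.
  apply Rlt_le, inv_INR_S_pos.
Qed.

Lemma Ylog_term_bound t j : 0 <= t < rho -> Y (t ^ S j) / INR (S j) <= Y t * t ^ j.
Proof.
  intros Ht. apply Rle_trans with (Y (t ^ S j) * 1). apply Rmult_le_compat_l. apply Y_nonneg, pow_S_lt_rho; auto.
  apply inv_INR_S_le1. rewrite Rmult_1_r, Rmult_comm. apply Y_pow_le; auto.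
Qed.

Lemma ex_series_Ylog t : 0 <= t < rho -> ex_series (fun j => Y (t ^ S j) / INR (S j)).
Proof.
  intros Ht. assert (Hr := rho_bounds).
  apply (ex_series_le (fun j => Y (t ^ S j) / INR (S j)) (fun j => Y t * t ^ j)).
  intros j. change (norm (Y (t ^ S j) / INR (S j))) with (Rabs (Y (t ^ S j) / INR (S j))).
  rewrite Rabs_right by (apply Rle_ge, Ylog_term_nonneg; auto). apply Ylog_term_bound; auto.
  assert (Hg : ex_series (fun j => t ^ j)) by (apply ex_series_geom; rewrite Rabs_right; lra).
  exact (ex_series_scal_l (Y t) _ Hg).
Qed.

Lemma Y_functional_eq t : 0 <= t < rho -> Y t = t * exp (Ylog t).
Proof.
  intros Ht. assert (Hz : Cmod (RtoC t) < rho) by (rewrite Cmod_RtoC_nonneg; lra).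
  assert (H := ytree_functional_eq (RtoC t) Hz). rewrite ytree_real in H by auto.
  assert (Hc : csum (fun j => Cdiv (ytree (Cpow (RtoC t) (S j))) (RtoC (INR (S j)))) = RtoC (Ylog t)).
  { apply injective_projections.
    - change (fst (csum (fun j => Cdiv (ytree (Cpow (RtoC t) (S j))) (RtoC (INR (S j)))))) with
        (Series (fun j => Re (Cdiv (ytree (Cpow (RtoC t) (S j))) (RtoC (INR (S j)))))).
      change (fst (RtoC (Ylog t))) with (Ylog t). unfold Ylog. apply Series_ext. intros j.
      rewrite Re_div_R by (apply Rgt_not_eq, INR_S_pos). rewrite <- RtoC_pow, ytree_real by (apply pow_S_lt_rho; auto). reflexivity.
    - change (snd (csum (fun j => Cdiv (ytree (Cpow (RtoC t) (S j))) (RtoC (INR (S j)))))) with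
        (Series (fun j => Im (Cdiv (ytree (Cpow (RtoC t) (S j))) (RtoC (INR (S j)))))).
      change (snd (RtoC (Ylog t))) with 0. rewrite <- Series_zero. apply Series_ext. intros j.
      rewrite Im_div_R by (apply Rgt_not_eq, INR_S_pos). rewrite <- RtoC_pow, ytree_real by (apply pow_S_lt_rho; auto).
      simpl. unfold Rdiv. ring. }
  rewrite Hc in H. apply (f_equal Re) in H. unfold Cexp, Cmult, RtoC, Re, Im in H. simpl in H.
  rewrite cos_0, sin_0 in H. rewrite H. ring.
Qed.

Definition Ylog_tail (t : R) := Series (fun j => Y (t ^ S (S j)) / INR (S (S j))).

Lemma Ylog_split t : 0 <= t < rho -> Ylog t = Y t + Ylog_tail t.
Proof.
  intros Ht. unfold Ylog, Ylog_tail. rewrite Series_incr_1 by (apply ex_series_Ylog; auto). simpl pow at 1.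
  rewrite Rmult_1_r. unfold INR at 1. simpl. f_equal. field.
Qed.

Lemma Y_mul_exp_neg_Y t : 0 <= t < rho -> Y t * exp (- Y t) = t * exp (Ylog_tail t).
Proof.
  intros Ht. rewrite (Y_functional_eq t Ht) at 1. rewrite Ylog_split, exp_plus by auto.
  replace (t * (exp (Y t) * exp (Ylog_tail t)) * exp (- Y t))
    with (t * exp (Ylog_tail t) * (exp (Y t) * exp (- Y t))) by ring.
  rewrite <- exp_plus, Rplus_opp_r, exp_0. ring.
Qed.

Lemma Ylog_tail_mono s t : 0 <= s <= t -> t < rho -> Ylog_tail s <= Ylog_tail t.
Proof.
  intros Hs Ht. apply Series_le.
  - intros j. split. apply Ylog_term_nonneg. lra. unfold Rdiv. apply Rmult_le_compat_r. apply Rlt_le, inv_INR_S_pos.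
    apply Y_mono. split. apply pow_le; lra. apply pow_incr; lra. apply pow_S_lt_rho; lra.
  - apply (ex_series_incr_1 (fun j => Y (t ^ S j) / INR (S j))). apply ex_series_Ylog. lra.
Qed.

Lemma Ylog_tail_nonneg t : 0 <= t < rho -> 0 <= Ylog_tail t.
Proof.
  intros Ht. apply Series_nonneg. intros j. apply Ylog_term_nonneg; auto.
  apply (ex_series_incr_1 (fun j => Y (t ^ S j) / INR (S j))). apply ex_series_Ylog. lra.
Qed.

Lemma lt_rho_le_inv_e t : 0 <= t < rho -> t <= exp (- 1).
Proof.
  intros Ht. eapply Rle_trans. 2: apply (xexp_neg_le (Y t)). rewrite Y_mul_exp_neg_Y by auto.
  rewrite <- (Rmult_1_r t) at 1. apply Rmult_le_compat_l. lra.
  rewrite <- exp_0. apply exp_le_exp, Ylog_tail_nonneg, Ht.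
Qed.

Lemma rho_le_inv_e : rho <= exp (- 1).
Proof.
  destruct (Rle_dec rho (exp (-1))) as [H|H]; auto. exfalso.
  assert (Hp := rho_pos). assert (He := exp_pos (-1)).
  assert (H1 := lt_rho_le_inv_e ((exp (-1) + rho) / 2) ltac:(split; lra)). lra.
Qed.

(* t exp (Ylog_tail t) = Y e^(-Y) increases strictly in t, whereas y e^(-y) decreases for y >= 1;
   so if Y t > 1, continuity gives t1 < t with 1 < Y t1 <= Y t, a contradiction. *)
Lemma Y_le_1 t : 0 <= t < rho -> Y t <= 1.
Proof.
  intros Ht. destruct (Rle_dec (Y t) 1) as [H|H]; auto. exfalso.
  assert (Ht0 : 0 < t). { destruct (Req_dec t 0); [subst; rewrite Y_0 in H; lra|lra]. }
  assert (Hc : continuity_pt Y t).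
  { apply PSeries_continuity. rewrite CV_radius_ycoef_rho. simpl. rewrite Rabs_right; lra. }
  destruct (Hc (Y t - 1) ltac:(lra)) as [alp [Ha Hx]].
  set (t1 := t - Rmin alp t / 2).
  assert (Hmin := Rmin_l alp t). assert (Hmin2 := Rmin_r alp t). assert (Hmin3 : 0 < Rmin alp t) by (apply Rmin_pos; lra).
  assert (Ht1 : 0 <= t1 < t) by (unfold t1; lra).
  specialize (Hx t1). simpl in Hx. unfold D_x, no_cond, R_dist in Hx.
  assert (HY1 : 1 < Y t1).
  { assert (Rabs (Y t1 - Y t) < Y t - 1). apply Hx. split. split; auto. lra.
    unfold t1. rewrite Rabs_left; lra.
    apply Rabs_def2 in H0. lra. }
  assert (G1 := Y_mul_exp_neg_Y t1 ltac:(lra)). assert (G2 := Y_mul_exp_neg_Y t Ht).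
  assert (Hm := Ylog_tail_mono t1 t ltac:(lra) ltac:(lra)).
  assert (HYm : Y t1 <= Y t) by (apply Y_mono; lra).
  assert (D := xexp_neg_antitone (Y t1) (Y t) ltac:(lra)).
  assert (Hea : exp (Ylog_tail t1) <= exp (Ylog_tail t)) by (apply exp_le_exp; auto).
  assert (He1 := exp_pos (Ylog_tail t1)).
  assert (t1 * exp (Ylog_tail t1) < t * exp (Ylog_tail t)) by nra.
  lra.
Qed.

Lemma ytree_bound z : Cmod z < rho -> Cmod (ytree z) <= Y (Cmod z).
Proof.
  intros Hz. assert (H0 := Cmod_ge_0 z).
  assert (E : forall n, Cmod (Cmult (RtoC (INR (tree_count n))) (Cpow z n)) = ycoef n * Cmod z ^ n).
  { intros n. rewrite Cmod_mult, Cmod_R, Cmod_pow, Rabs_right. reflexivity. apply Rle_ge, pos_INR. }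
  destruct (csum_Cmod_le (fun n => Cmult (RtoC (INR (tree_count n))) (Cpow z n))) as (_ & _ & H).
  - apply (ex_series_ext (fun n => ycoef n * Cmod z ^ n)). intros; rewrite E; auto. apply ex_Y. lra.
  - unfold ytree. eapply Rle_trans. apply H. right. unfold Y. apply Series_ext. intros; apply E.
Qed.

Lemma rho_le_041 : rho <= 0.41.
Proof.
  assert (H := rho_le_inv_e). replace (exp (- 1)) with (/ exp 1) in H by (rewrite <- exp_Ropp; f_equal; ring). assert (H1 := exp_1_ge).
  eapply Rle_trans. apply H. apply (Rmult_le_reg_r (exp 1)). lra. rewrite Rinv_l by lra. nra.
Qed.

(** * Contraction *)

(* |x| <= rho + rho/10 puts x^2 in the disc of radius r0 < rho, and
   Y(r0) <= 1.331 rho <= Lrate (1 - r0) because rho <= 0.41. *)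
Definition Lrate : R := 7/10.
Definition r0 : R := (rho + rho / 10) ^ 2.

Lemma r0_facts : 0 < r0 /\ r0 < rho /\ r0 <= 1 /\ Y r0 <= Lrate * (1 - r0).
Proof.
  assert (Hr := rho_bounds). assert (H41 := rho_le_041).
  assert (Hr0 : r0 = 121/100 * rho * rho) by (unfold r0; simpl; field).
  set (t0 := 10/11 * rho).
  assert (Ht0 : 0 <= r0 <= t0 /\ t0 < rho /\ 0 < t0) by (unfold t0; rewrite Hr0; repeat split; nra).
  assert (HY := Y_ratio r0 t0 ltac:(lra) ltac:(lra) ltac:(lra)).
  assert (HY1 := Y_le_1 t0 ltac:(lra)).
  assert (Hq : r0 / t0 = 1331/1000 * rho) by (unfold t0; rewrite Hr0; field; lra).
  assert (HYt : 0 <= Y t0) by (apply Y_nonneg; lra).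
  assert (Hqp : 0 <= r0 / t0) by (rewrite Hq; lra).
  assert (Y r0 <= 1331/1000 * rho) by (rewrite <- Hq; nra).
  unfold Lrate. repeat split; try nra.
Qed.

Definition contraction_bound (k : nat) (z v : C) : Prop :=
  Cmod (yk k z v) <= Y (Cmod z) /\
  Cmod (wk k z v) <= Cmod (Cminus v (RtoC 1)) * Lrate ^ k * Y (Cmod z).

Lemma contraction_bound_0 z v : Cmod z <= r0 -> Cmod v <= 1 -> contraction_bound 0 z v.
Proof.
  destruct r0_facts as (_ & Hr0r & _ & _). intros Hz Hv.
  assert (Hyb := ytree_bound z ltac:(lra)). assert (Hy0 := Cmod_ge_0 (ytree z)). split.
  - simpl. rewrite Cmod_mult. nra.
  - unfold wk. simpl.
    replace (Cminus (Cmult v (ytree z)) (ytree z)) with (Cmult (Cminus v (RtoC 1)) (ytree z))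
      by (unfold Cminus; ring).
    rewrite Cmod_mult, Rmult_1_r. apply Rmult_le_compat_l. apply Cmod_ge_0. auto.
Qed.

Section ContractionStep.
Variables (k : nat) (z v : C).
Hypothesis Hz : Cmod z <= r0.
Hypothesis Hv : Cmod v <= 1.
Hypothesis IH : forall z' v', Cmod z' <= r0 -> Cmod v' <= 1 -> contraction_bound k z' v'.

Let r := Cmod z.
Let dv := Cmod (Cminus v (RtoC 1)).
Let aK j := Cdiv (yk k (Cpow z (S j)) (Cpow v (S j))) (RtoC (INR (S j))).
Let aY j := Cdiv (ytree (Cpow z (S j))) (RtoC (INR (S j))).
Let aW j := Cdiv (wk k (Cpow z (S j)) (Cpow v (S j))) (RtoC (INR (S j))).

Lemma r_lt_rho : 0 <= r < rho.
Proof. destruct r0_facts as (_ & Hr0r & _ & _). split. apply Cmod_ge_0. unfold r. lra. Qed.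

Lemma Cmod_Cpow_z_le j : Cmod (Cpow z (S j)) <= r0.
Proof.
  destruct r0_facts as (_ & _ & Hr01 & _). assert (Hr := r_lt_rho). unfold r in Hr.
  rewrite Cmod_pow. eapply Rle_trans. apply pow_S_le_base. split; lra. exact Hz.
Qed.

Lemma Cmod_Cpow_v_le j : Cmod (Cpow v (S j)) <= 1.
Proof. rewrite Cmod_pow. apply pow_le1. split; auto. apply Cmod_ge_0. Qed.

Lemma aK_bound j : Cmod (aK j) <= Y (r ^ S j) / INR (S j).
Proof.
  unfold aK. rewrite Cmod_div_R by apply INR_S_pos. unfold Rdiv. apply Rmult_le_compat_r.
  apply Rlt_le, inv_INR_S_pos. unfold r. rewrite <- Cmod_pow.
  apply IH. apply Cmod_Cpow_z_le. apply Cmod_Cpow_v_le.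
Qed.

Lemma aY_bound j : Cmod (aY j) <= Y (r ^ S j) / INR (S j).
Proof.
  unfold aY. rewrite Cmod_div_R by apply INR_S_pos. unfold Rdiv. apply Rmult_le_compat_r.
  apply Rlt_le, inv_INR_S_pos. unfold r. rewrite <- Cmod_pow. apply ytree_bound.
  rewrite Cmod_pow. apply pow_S_lt_rho, r_lt_rho.
Qed.

Lemma aW_bound j : Cmod (aW j) <= dv * Lrate ^ k * Y r * r ^ j.
Proof.
  assert (Hrr := r_lt_rho). assert (Hdv : 0 <= dv) by apply Cmod_ge_0.
  assert (HLk : 0 <= Lrate ^ k) by (apply pow_le; unfold Lrate; lra).
  unfold aW. rewrite Cmod_div_R by apply INR_S_pos.
  destruct (IH _ _ (Cmod_Cpow_z_le j) (Cmod_Cpow_v_le j)) as [_ HW].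
  rewrite Cmod_pow in HW. fold r in HW.
  set (dj := Cmod (Cminus (Cpow v (S j)) (RtoC 1))) in HW.
  assert (H1 : dj / INR (S j) <= dv) by apply Cmod_Cpow_sub_1_div, Hv.
  assert (H2 := Y_pow_le r j Hrr).
  assert (HYj : 0 <= Y (r ^ S j)) by (apply Y_nonneg, pow_S_lt_rho; auto).
  assert (Hdj : 0 <= dj / INR (S j)) by (apply Rmult_le_pos; [apply Cmod_ge_0|apply Rlt_le, inv_INR_S_pos]).
  apply Rle_trans with (dj / INR (S j) * Lrate ^ k * Y (r ^ S j)).
  { unfold Rdiv. replace (dj * / INR (S j) * Lrate ^ k * Y (r ^ S j)) with
      (dj * Lrate ^ k * Y (r ^ S j) * / INR (S j)) by ring.
    apply Rmult_le_compat_r. apply Rlt_le, inv_INR_S_pos. auto. }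
  apply Rle_trans with (dv * Lrate ^ k * Y (r ^ S j)).
  { apply Rmult_le_compat_r; auto. apply Rmult_le_compat_r; auto. }
  replace (dv * Lrate ^ k * Y r * r ^ j) with (dv * Lrate ^ k * (r ^ j * Y r)) by ring.
  apply Rmult_le_compat_l; nra.
Qed.

Lemma csum_aK_split : csum aK = Cplus (csum aY) (csum aW).
Proof.
  assert (Hrr := r_lt_rho).
  destruct (csum_dominated aY _ aY_bound (ex_series_Ylog r Hrr)) as (YR & YI & _).
  destruct (csum_dominated aW _ aW_bound) as (WR & WI & _).
  { apply (ex_series_scal_l _ (fun j => r ^ j)). apply ex_series_geom.
    assert (Hr := rho_bounds). rewrite Rabs_right; lra. }
  rewrite <- csum_plus; auto. apply csum_ext. intros j. unfold aK, aY, aW, wk, Cdiv, Cminus. ring.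
Qed.

Lemma yk_S_eq : yk (S k) z v = Cmult (ytree z) (Cexp (csum aW)).
Proof.
  assert (Hzr : Cmod z < rho) by apply r_lt_rho.
  change (yk (S k) z v) with (Cmult z (Cexp (csum aK))).
  rewrite csum_aK_split, Cexp_add, (ytree_functional_eq z Hzr). fold aY. ring.
Qed.

Lemma yk_S_bound : Cmod (yk (S k) z v) <= Y r.
Proof.
  assert (Hrr := r_lt_rho).
  destruct (csum_dominated aK _ aK_bound (ex_series_Ylog r Hrr)) as (_ & _ & KB).
  change (yk (S k) z v) with (Cmult z (Cexp (csum aK))).
  rewrite Cmod_mult, Cmod_Cexp, (Y_functional_eq r Hrr).
  apply Rmult_le_compat_l. apply Cmod_ge_0. apply exp_le_exp.
  eapply Rle_trans. apply Rle_abs. eapply Rle_trans. apply re_le_Cmod. exact KB.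
Qed.

Lemma wk_S_bound : Cmod (wk (S k) z v) <= dv * Lrate ^ S k * Y r.
Proof.
  destruct r0_facts as (_ & _ & _ & HL). assert (Hrr := r_lt_rho). assert (Hr1 := rho_bounds).
  assert (Hdv : 0 <= dv) by apply Cmod_ge_0.
  assert (HLk : 0 <= Lrate ^ k) by (apply pow_le; unfold Lrate; lra).
  assert (HYr := Y_nonneg r Hrr).
  set (cW := csum aW).
  assert (HcW : Cmod cW <= dv * Lrate ^ k * Y r / (1 - r))
    by (apply csum_geometric_le; [lra | exact aW_bound]).
  assert (Hyz := ytree_bound z (proj2 Hrr)). fold r in Hyz.
  assert (Ew : wk (S k) z v = Cmult (ytree z) (Cminus (Cexp cW) (RtoC 1))).
  { unfold wk. rewrite yk_S_eq. fold cW. unfold Cminus. ring. }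
  assert (Hmax : Cmod (ytree z) * Rmax 1 (exp (Re cW)) <= Y r).
  { apply Rmax_case_strong; intros _. lra.
    rewrite <- Cmod_Cexp, <- Cmod_mult. unfold cW. rewrite <- yk_S_eq. apply yk_S_bound. }
  assert (Hwk : Cmod (wk (S k) z v) <= Cmod cW * Y r).
  { rewrite Ew, Cmod_mult. assert (Hm1 := Cmod_Cexp_sub_1 cW).
    apply Rle_trans with (Cmod (ytree z) * (Cmod cW * Rmax 1 (exp (Re cW)))).
    - apply Rmult_le_compat_l; auto. apply Cmod_ge_0.
    - replace (Cmod (ytree z) * (Cmod cW * Rmax 1 (exp (Re cW)))) with
        (Cmod cW * (Cmod (ytree z) * Rmax 1 (exp (Re cW)))) by ring.
      apply Rmult_le_compat_l. apply Cmod_ge_0. auto. }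
  assert (Hratio : Y r / (1 - r) <= Lrate).
  { assert (HYr0 : Y r <= Y r0)
      by (apply Y_mono; destruct r0_facts as (_ & Hr0r & _); unfold r in *; lra).
    assert (Hzr : r <= r0) by exact Hz.
    apply (Rmult_le_reg_r (1 - r)). lra. unfold Rdiv. rewrite Rmult_assoc, Rinv_l by lra. rewrite Rmult_1_r.
    apply Rle_trans with (Lrate * (1 - r0)). lra. apply Rmult_le_compat_l. unfold Lrate; lra. lra. }
  eapply Rle_trans. apply Hwk.
  apply Rle_trans with (dv * Lrate ^ k * Y r / (1 - r) * Y r). apply Rmult_le_compat_r; auto.
  simpl pow. replace (dv * Lrate ^ k * Y r / (1 - r) * Y r) with (dv * Lrate ^ k * Y r * (Y r / (1 - r))) by (field; lra).
  replace (dv * (Lrate * Lrate ^ k) * Y r) with (dv * Lrate ^ k * Y r * Lrate) by ring.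
  apply Rmult_le_compat_l; auto. apply Rmult_le_pos; auto. apply Rmult_le_pos; auto.
Qed.

End ContractionStep.

Lemma yk_wk_bound k z v : Cmod z <= r0 -> Cmod v <= 1 -> contraction_bound k z v.
Proof.
  revert z v. induction k; intros z v Hz Hv.
  - apply contraction_bound_0; auto.
  - split. apply yk_S_bound; auto. apply wk_S_bound; auto.
Qed.

Lemma Sigmak_term_bound k (x u : C) j : Cmod u <= 1 -> Cmod x <= 1 -> Cmod x * Cmod x <= r0 ->
  Cmod (Cdiv (wk k (Cpow x (S (S j))) (Cpow u (S (S j)))) (RtoC (INR (S (S j)))))
    <= Cmod (Cminus u (RtoC 1)) * Lrate ^ k * Cmod x ^ j.
Proof.
  destruct r0_facts as (_ & Hr0r & _ & _). intros Hu Hx1 Hx2.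
  set (s := Cmod x) in *. assert (Hs0 : 0 <= s) by apply Cmod_ge_0.
  set (dv := Cmod (Cminus u (RtoC 1))). assert (Hdv : 0 <= dv) by apply Cmod_ge_0.
  assert (HLk : 0 <= Lrate ^ k) by (apply pow_le; unfold Lrate; lra).
  assert (Hsj : 0 <= s ^ j <= 1) by (split; [apply pow_le | apply pow_le1]; lra).
  assert (Hxj : Cmod (Cpow x (S (S j))) = s ^ j * (s * s)) by (rewrite Cmod_pow; fold s; simpl; ring).
  assert (Huj : Cmod (Cpow u (S (S j))) <= 1)
    by (rewrite Cmod_pow; apply pow_le1; split; auto; apply Cmod_ge_0).
  destruct (yk_wk_bound k _ _ ltac:(rewrite Hxj; nra) Huj) as [_ HW].
  rewrite Hxj in HW.
  assert (HY1 : Y (s * s) <= 1) by (apply Y_le_1; split; nra).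
  assert (HY : Y (s ^ j * (s * s)) <= s ^ j).
  { eapply Rle_trans. apply Y_mul_le; [lra | split; nra]. nra. }
  assert (Hd := Cmod_Cpow_sub_1_div u (S j) Hu). fold dv in Hd.
  set (dj := Cmod (Cminus (Cpow u (S (S j))) (RtoC 1))) in HW, Hd.
  assert (Hdj : 0 <= dj / INR (S (S j))) by (apply Rmult_le_pos; [apply Cmod_ge_0|apply Rlt_le, inv_INR_S_pos]).
  rewrite Cmod_div_R by apply INR_S_pos.
  apply Rle_trans with (dj / INR (S (S j)) * Lrate ^ k * Y (s ^ j * (s * s))).
  { unfold Rdiv. replace (dj * / INR (S (S j)) * Lrate ^ k * Y (s ^ j * (s * s))) with
      (dj * Lrate ^ k * Y (s ^ j * (s * s)) * / INR (S (S j))) by ring.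
    apply Rmult_le_compat_r. apply Rlt_le, inv_INR_S_pos. auto. }
  assert (0 <= Y (s ^ j * (s * s))) by (apply Y_nonneg; nra).
  apply Rmult_le_compat; auto. apply Rmult_le_pos; auto. apply Rmult_le_compat_r; auto.
Qed.

Theorem mainTheorem10 :
  exists (eps Ct L : R), 0 < eps /\ 0 < Ct /\ 0 < L /\ L < 1 /\
    forall (u x : C) (k : nat),
      Cmod u <= 1 -> Cmod x <= rho + eps ->
      Cmod (Sigmak k x u) <= Ct * Cmod (Cminus u 1) * L ^ k.
Proof.
  assert (Hrb := rho_bounds). assert (H41 := rho_le_041).
  exists (rho / 10), 2, Lrate. unfold Lrate at 1 2. do 4 (split; [lra|]).
  intros u x k Hu Hx.
  set (s := Cmod x) in *. assert (Hs0 : 0 <= s) by apply Cmod_ge_0.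
  set (c := Cmod (Cminus u (RtoC 1)) * Lrate ^ k).
  assert (Hc : 0 <= c) by (apply Rmult_le_pos; [apply Cmod_ge_0 | apply pow_le; unfold Lrate; lra]).
  assert (HS : Cmod (Sigmak k x u) <= c / (1 - s)).
  { apply csum_geometric_le. lra. intros j. apply Sigmak_term_bound; fold s; auto. lra.
    unfold r0. simpl. nra. }
  eapply Rle_trans. apply HS. unfold Rdiv. replace (2 * Cmod (Cminus u 1) * Lrate ^ k) with (c * 2) by (unfold c; ring).
  apply Rmult_le_compat_l; auto. rewrite <- (Rinv_inv 2). apply Rinv_le_contravar; lra.
Qed.
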